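(* Let $F_{ij}$ ($0\le i\le m$, $0\le j\le n$) be an $m\times n$ generalized T-net in $I^3$. Then, up to interchanging the indices $i$ and $j$, there exist $a_0,\dots,a_{m+1},b_0,\dots,b_{n+1}\in\mathbb{R}^3$ and $\sigma_0,\dots,\sigma_{m+1}>0$ such that, with $\Delta_{ij}:=a_{i+1}-a_i+b_j(\sigma_{i+1}-\sigma_i)$, we have $\det(e_3,b_{j+1}-b_j,\Delta_{ij})\ne0$ for all $0\le i\le m$, $0\le j\le n$ and $$F_{ij}=-\frac{1}{\det(e_3,b_{j+1}-b_j,\Delta_{ij})}\begin{pmatrix}\det(e_1,b_{j+1}-b_j,\Delta_{ij})\\ \det(e_2,b_{j+1}-b_j,\Delta_{ij})\\ \det(a_i+\sigma_ib_j,b_{j+1}-b_j,\Delta_{ij})\end{pmatrix}.$$ Moreover, for some $\varepsilon>0$ the family $$F_{ij}(t)=-\frac{1}{\det(e_3,b_{j+1}-b_j,\Delta_{ij})}\begin{pmatrix}\det(e_1,b_{j+1}-b_j,\Delta_{ij})\\ \det(e_2,b_{j+1}-b_j,\Delta_{ij})\\ \det(P_{ij}(t),b_{j+1}-b_j,\Delta_{ij})\end{pmatrix},\quad t\in[0,\varepsilon],$$ where $$P_{ij}(t)=a_0+\sum_{k=1}^{i}\frac{(a_k-a_{k-1})(\sigma_k+\sigma_{k-1})}{\sqrt{t+\sigma_k^2}+\sqrt{t+\sigma_{k-1}^2}}+\sqrt{t+\sigma_i^2}\,b_j,$$ is a nontrivial isotropic isometric deformation of $F_{ij}$.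
   Context: $I^3$ is $\mathbb{R}^3$ with coordinates $(x,y,z)$, $e_1=(1,0,0)^T,e_2=(0,1,0)^T,e_3=(0,0,1)^T$; a line or plane is isotropic if parallel to the $z$-axis; top view of $(x,y,z)$ is $(x,y)$. Isotropic congruences: maps $\mathbf{x}\mapsto A\mathbf{x}+\mathbf{b}$, $A=\begin{pmatrix}\cos\phi&-\sin\phi&0\\ \sin\phi&\cos\phi&0\\ c_1&c_2&1\end{pmatrix}$. Metric duality: point $P=(P^1,P^2,P^3)\leftrightarrow$ plane $P^*\colon z=P^1x+P^2y-P^3$. An $m\times n$ net: points $F_{ij}$, $0\le i\le m,0\le j\le n$, with $F_{ij},F_{i+1,j},F_{i+1,j+1},F_{i,j+1}$ consecutive vertices of a convex planar quadrilateral (face $p_{ij}$) for all $0\le i<m,0\le j<n$. Its parameter lines are the broken lines $F_{i0}\dots F_{in}$ ($0\le i\le m$) and $F_{0j}\dots F_{mj}$ ($0\le j\le n$). Boundary vertices: $i\in\{0,m\}$ or $j\in\{0,n\}$; consecutive faces around non-boundary $F_{ij}$: $p_{i-1,j-1},p_{i,j-1},p_{ij},p_{i-1,j}$. Convex 4-hedral angle with vertex $O$: union of rays from $O$ meeting a convex quadrilateral in a plane not through $O$; flat angles: rays through one side; admissible: isotropic line through $O$ meets its interior. Dual-convex: $m,n\ge2$ and at each non-boundary vertex the four consecutive face planes are the planes of four consecutive flat angles of an admissible convex 4-hedral angle. A generalized T-net is a dual-convex $m\times n$ net all of whose parameter lines are planar (each lies in a plane), the parameter lines of one family lying in isotropic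 planes. Curvature at non-boundary vertex with consecutive faces $p_1..p_4$: $\Omega=\frac12\sum_{k=1}^4\det(\overline{p_k^*},\overline{p_{k+1}^*})$, $p_5=p_1$. An isotropic isometric deformation of a dual-convex net $F_{ij}$ is a continuous family of $m\times n$ nets $F_{ij}(t)$ with $F_{ij}(0)=F_{ij}$, corresponding faces isotropically congruent, and equal curvatures at corresponding non-boundary vertices; it is nontrivial if not for every $t$ is there an isotropic congruence $C_t$ with $F_{ij}(t)=C_t(F_{ij})$ for all $i,j$. *)

From Stdlib Require Import Reals Lra.
Open Scope R_scope.

Definition vec3 : Type := (R * R * R)%type.
Definition mk3 (x y z : R) : vec3 := (x, y, z).
Definition vx (v : vec3) : R := fst (fst v).
Definition vy (v : vec3) : R := snd (fst v).
Definition vz (v : vec3) : R := snd v.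

Definition vadd (u v : vec3) : vec3 := mk3 (vx u + vx v) (vy u + vy v) (vz u + vz v).
Definition vsub (u v : vec3) : vec3 := mk3 (vx u - vx v) (vy u - vy v) (vz u - vz v).
Definition vscale (s : R) (v : vec3) : vec3 := mk3 (s * vx v) (s * vy v) (s * vz v).
Definition vzero : vec3 := mk3 0 0 0.
Definition dot (u v : vec3) : R := vx u * vx v + vy u * vy v + vz u * vz v.
Definition cross (u v : vec3) : vec3 :=
  mk3 (vy u * vz v - vz u * vy v) (vz u * vx v - vx u * vz v) (vx u * vy v - vy u * vx v).
Definition det3 (u v w : vec3) : R := dot u (cross v w).

Definition e1 : vec3 := mk3 1 0 0.
Definition e2 : vec3 := mk3 0 1 0.
Definition e3 : vec3 := mk3 0 0 1.

Fixpoint vsum1 (f : nat -> vec3) (i : nat) : vec3 :=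
  match i with
  | O => vzero
  | S i' => vadd (vsum1 f i') (f (S i'))
  end.

Definition det2 (a b : R * R) : R := fst a * snd b - snd a * fst b.

(** A, B, C, D are consecutive vertices of a (non-degenerate) convex planar
    quadrilateral: coplanar, and all turns at the vertices are in the same
    (nonzero) rotational direction. *)
Definition convex_quad (A B C D : vec3) : Prop :=
  det3 (vsub B A) (vsub C A) (vsub D A) = 0 /\
  let t1 := cross (vsub B A) (vsub C B) in
  let t2 := cross (vsub C B) (vsub D C) in
  let t3 := cross (vsub D C) (vsub A D) in
  let t4 := cross (vsub A D) (vsub B A) in
  0 < dot t1 t1 /\ 0 < dot t1 t2 /\ 0 < dot t1 t3 /\ 0 < dot t1 t4.

Definition net_of := nat -> nat -> vec3.

(** face p_ij has vertices F i j, F (i+1) j, F (i+1) (j+1), F i (j+1) *)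
Definition is_net (m n : nat) (F : net_of) : Prop :=
  forall i j, (i < m)%nat -> (j < n)%nat ->
    convex_quad (F i j) (F (S i) j) (F (S i) (S j)) (F i (S j)).

Definition in_face_plane (F : net_of) (i j : nat) (X : vec3) : Prop :=
  det3 (vsub (F (S i) j) (F i j)) (vsub (F i (S j)) (F i j)) (vsub X (F i j)) = 0.

(** Convex 4-hedral angle with vertex O spanned over the convex quadrilateral
    Q1 Q2 Q3 Q4 (whose plane does not pass through O); it is admissible if the
    isotropic line through O meets its interior, i.e. meets an open ray from O
    through an interior point of the quadrilateral. *)
Definition convex_4hedral (O Q1 Q2 Q3 Q4 : vec3) : Prop :=
  convex_quad Q1 Q2 Q3 Q4 /\
  det3 (vsub Q2 Q1) (vsub Q4 Q1) (vsub O Q1) <> 0.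

Definition admissible_4hedral (O Q1 Q2 Q3 Q4 : vec3) : Prop :=
  exists (s lam w1 w2 w3 w4 : R),
    0 < lam /\ 0 < w1 /\ 0 < w2 /\ 0 < w3 /\ 0 < w4 /\ w1 + w2 + w3 + w4 = 1 /\
    vscale s e3 =
      vscale lam (vsub (vadd (vadd (vscale w1 Q1) (vscale w2 Q2))
                             (vadd (vscale w3 Q3) (vscale w4 Q4))) O).

(** At the non-boundary vertex F i j the consecutive faces
    p_{i-1,j-1}, p_{i,j-1}, p_{ij}, p_{i-1,j} lie in the planes of the
    consecutive flat angles (O Q1 Q2), (O Q2 Q3), (O Q3 Q4), (O Q4 Q1). *)
Definition dual_convex_at (F : net_of) (i j : nat) : Prop :=
  let O := F i j in
  exists Q1 Q2 Q3 Q4 : vec3,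
    convex_4hedral O Q1 Q2 Q3 Q4 /\ admissible_4hedral O Q1 Q2 Q3 Q4 /\
    in_face_plane F (i - 1) (j - 1) Q1 /\ in_face_plane F (i - 1) (j - 1) Q2 /\
    in_face_plane F i (j - 1) Q2 /\ in_face_plane F i (j - 1) Q3 /\
    in_face_plane F i j Q3 /\ in_face_plane F i j Q4 /\
    in_face_plane F (i - 1) j Q4 /\ in_face_plane F (i - 1) j Q1.

Definition dual_convex (m n : nat) (F : net_of) : Prop :=
  is_net m n F /\ (2 <= m)%nat /\ (2 <= n)%nat /\
  forall i j, (1 <= i)%nat -> (i < m)%nat -> (1 <= j)%nat -> (j < n)%nat ->
    dual_convex_at F i j.

(** a set of points lies in a plane {X | N.X = d}, N <> 0; isotropic plane: N_3 = 0 *)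
Definition in_some_plane (P : vec3 -> Prop) : Prop :=
  exists (N : vec3) (d : R), N <> vzero /\ forall X, P X -> dot N X = d.
Definition in_some_isotropic_plane (P : vec3 -> Prop) : Prop :=
  exists (N : vec3) (d : R), N <> vzero /\ vz N = 0 /\ forall X, P X -> dot N X = d.

Definition line_i (n : nat) (F : net_of) (i : nat) : vec3 -> Prop :=
  fun X => exists j, (j <= n)%nat /\ X = F i j.
Definition line_j (m : nat) (F : net_of) (j : nat) : vec3 -> Prop :=
  fun X => exists i, (i <= m)%nat /\ X = F i j.

Definition generalized_T_net (m n : nat) (F : net_of) : Prop :=
  dual_convex m n F /\
  (forall i, (i <= m)%nat -> in_some_plane (line_i n F i)) /\
  (forall j, (j <= n)%nat -> in_some_plane (line_j m F j)) /\
  ((forall i, (i <= m)%nat -> in_some_isotropic_plane (line_i n F i)) \/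
   (forall j, (j <= n)%nat -> in_some_isotropic_plane (line_j m F j))).

Definition iso_cong (phi c1 c2 : R) (b : vec3) (X : vec3) : vec3 :=
  mk3 (cos phi * vx X - sin phi * vy X + vx b)
      (sin phi * vx X + cos phi * vy X + vy b)
      (c1 * vx X + c2 * vy X + vz X + vz b).

Definition faces_iso_congruent (F G : net_of) (i j : nat) : Prop :=
  exists (phi c1 c2 : R) (b : vec3),
    G i j = iso_cong phi c1 c2 b (F i j) /\
    G (S i) j = iso_cong phi c1 c2 b (F (S i) j) /\
    G (S i) (S j) = iso_cong phi c1 c2 b (F (S i) (S j)) /\
    G i (S j) = iso_cong phi c1 c2 b (F i (S j)).

(** top view of the metric dual point of the (non-isotropic) plane of face p_ij:
    the plane z = P1 x + P2 y - P3 gives (P1, P2). *)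
Definition dual_top (F : net_of) (i j : nat) : R * R :=
  let N := cross (vsub (F (S i) j) (F i j)) (vsub (F i (S j)) (F i j)) in
  (- vx N / vz N, - vy N / vz N).

Definition curvature (F : net_of) (i j : nat) : R :=
  let p1 := dual_top F (i - 1) (j - 1) in
  let p2 := dual_top F i (j - 1) in
  let p3 := dual_top F i j in
  let p4 := dual_top F (i - 1) j in
  / 2 * (det2 p1 p2 + det2 p2 p3 + det2 p3 p4 + det2 p4 p1).

Definition continuous_on_interval (f : R -> R) (a b : R) : Prop :=
  forall t, a <= t <= b -> forall e, 0 < e -> exists d, 0 < d /\
    forall s, a <= s <= b -> Rabs (s - t) < d -> Rabs (f s - f t) < e.

Definition iso_isometric_deformation (m n : nat) (F : net_of) (eps : R)
    (G : R -> net_of) : Prop :=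
  (forall i j, (i <= m)%nat -> (j <= n)%nat -> G 0 i j = F i j) /\
  (forall i j, (i <= m)%nat -> (j <= n)%nat ->
     continuous_on_interval (fun t => vx (G t i j)) 0 eps /\
     continuous_on_interval (fun t => vy (G t i j)) 0 eps /\
     continuous_on_interval (fun t => vz (G t i j)) 0 eps) /\
  (forall t, 0 <= t <= eps -> is_net m n (G t)) /\
  (forall t, 0 <= t <= eps -> forall i j, (i < m)%nat -> (j < n)%nat ->
     faces_iso_congruent F (G t) i j) /\
  (forall t, 0 <= t <= eps -> forall i j,
     (1 <= i)%nat -> (i < m)%nat -> (1 <= j)%nat -> (j < n)%nat ->
     curvature (G t) i j = curvature F i j).

Definition nontrivial_deformation (m n : nat) (F : net_of) (eps : R)
    (G : R -> net_of) : Prop :=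
  iso_isometric_deformation m n F eps G /\
  ~ (forall t, 0 <= t <= eps -> exists (phi c1 c2 : R) (b : vec3),
        forall i j, (i <= m)%nat -> (j <= n)%nat -> G t i j = iso_cong phi c1 c2 b (F i j)).

Definition Delta (a b : nat -> vec3) (sigma : nat -> R) (i j : nat) : vec3 :=
  vadd (vsub (a (S i)) (a i)) (vscale (sigma (S i) - sigma i) (b j)).

Definition T_point (a b : nat -> vec3) (sigma : nat -> R) (i j : nat) (X : vec3) : vec3 :=
  let db := vsub (b (S j)) (b j) in
  let D := Delta a b sigma i j in
  vscale (- / det3 e3 db D) (mk3 (det3 e1 db D) (det3 e2 db D) (det3 X db D)).

Definition P_t (a b : nat -> vec3) (sigma : nat -> R) (i j : nat) (t : R) : vec3 :=
  vadd (vadd (a 0%nat)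
         (vsum1 (fun k => vscale ((sigma k + sigma (k - 1)%nat) /
                                  (sqrt (t + sigma k ^ 2) + sqrt (t + sigma (k - 1)%nat ^ 2)))
                                 (vsub (a k) (a (k - 1)%nat))) i))
       (vscale (sqrt (t + sigma i ^ 2)) (b j)).

Definition T_family (a b : nat -> vec3) (sigma : nat -> R) : R -> net_of :=
  fun t i j => T_point a b sigma i j (P_t a b sigma i j t).

(** conclusion of the proposition for a fixed orientation of the indices *)
Definition T_representation (m n : nat) (F : net_of) : Prop :=
  exists (a b : nat -> vec3) (sigma : nat -> R),
    (forall k, (k <= S m)%nat -> 0 < sigma k) /\
    (forall i j, (i <= m)%nat -> (j <= n)%nat ->
       det3 e3 (vsub (b (S j)) (b j)) (Delta a b sigma i j) <> 0 /\
       F i j = T_point a b sigma i j (vadd (a i) (vscale (sigma i) (b j)))) /\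
    exists eps, 0 < eps /\ nontrivial_deformation m n F eps (T_family a b sigma).

Definition transpose_net (F : net_of) : net_of := fun i j => F j i.

(** Under the metric duality the faces of the net become the points [D k l] of a
    dual net, and each vertex [F i j] is the dual point of a plane through the
    dual points of the faces around it.  Planarity of a row of [F] means that
    the two rows of [D] adjacent to it are related by a homothety centred at the
    dual point of the row plane; isotropy of the columns makes its ratio the
    same along the row, and dual convexity makes it positive.  Hence
    [D] has the form [a_i + sigma_i b_j] with [sigma_i > 0], and after adding
    virtual boundary rows and columns of the same form, [F i j] is the dual
    point of the plane through [a_i + sigma_i b_j] spanned by [b_(j+1) - b_j]
    and [Delta_ij]: this is the stated formula.

    The deformation replaces [sigma_i] by [sqrt (t + sigma_i^2)] and rescales
    the row steps so that the top view of every dual quadrilateral keeps its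
    area [(sigma_(i+1) + sigma_i) det(Delta_ij, b_(j+1) - b_j) / 2], which is
    the curvature.  The top views of the vertices do not move, so corresponding
    faces differ by isotropic shears, whereas the column edges of the dual net
    are scaled by [sqrt (t + sigma_i^2) / sigma_i], which no congruence can do. *)

From Stdlib Require Import Reals Lra Lia Psatz.
Open Scope R_scope.

Lemma det3_e3 u v : det3 e3 u v = vx u * vy v - vy u * vx v.
Proof. unfold det3, dot, cross, e3, mk3, vx, vy, vz; simpl; ring. Qed.

Ltac vsimpl := rewrite ?det3_e3; unfold det3, vadd, vsub, vscale, vzero, dot, cross, e1, e2, e3, mk3, vx, vy, vz; simpl.
Tactic Notation "vsimpl" "in" "*" :=
  rewrite ?det3_e3 in *; unfold det3, vadd, vsub, vscale, vzero, dot, cross, e1, e2, e3, mk3, vx, vy, vz in *; simpl in *.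

Lemma vec3_eq (u v : vec3) : vx u = vx v -> vy u = vy v -> vz u = vz v -> u = v.
Proof. destruct u as [[x y] z], v as [[x' y'] z']; unfold vx, vy, vz; simpl; intros; subst; reflexivity. Qed.

Lemma vsub_neq0 X Y : X <> Y -> vsub X Y <> vzero.
Proof.
  intros H E. apply H. apply vec3_eq;
  [apply (f_equal vx) in E | apply (f_equal vy) in E | apply (f_equal vz) in E]; vsimpl in *; lra.
Qed.

Lemma dot_self_pos X : X <> vzero -> 0 < dot X X.
Proof.
  intro H. destruct (Req_dec (vx X) 0), (Req_dec (vy X) 0), (Req_dec (vz X) 0);
    try (unfold dot; nra). exfalso; apply H, vec3_eq; auto.
Qed.

Lemma dot_vadd u v w : dot (vadd u v) w = dot u w + dot v w.
Proof. vsimpl; ring. Qed.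
Lemma dot_vscale s u w : dot (vscale s u) w = s * dot u w.
Proof. vsimpl; ring. Qed.
Lemma dot_vscale_r s u w : dot u (vscale s w) = s * dot u w.
Proof. vsimpl; ring. Qed.

Lemma det3_e3_scale_l s X Y : det3 e3 (vscale s X) Y = s * det3 e3 X Y.
Proof. vsimpl; ring. Qed.
Lemma det3_e3_swap X Y : det3 e3 X Y = - det3 e3 Y X.
Proof. vsimpl; ring. Qed.

(** [pol X P = 0] says that X lies on the dual plane P*, equivalently that P
    lies on X*; [dpol X d = 0] says that the direction d is parallel to X*. *)
Definition pol (X P : vec3) : R := vx X * vx P + vy X * vy P - vz X - vz P.
Definition dpol (X d : vec3) : R := vx X * vx d + vy X * vy d - vz d.

Definition top (X : vec3) : R * R := (vx X, vy X).

(** the top views of A, B, C are not collinear *)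
Definition ncol (A B C : vec3) : Prop := det3 e3 (vsub B A) (vsub C A) <> 0.

Lemma ncol_rot A B C : ncol A B C -> ncol B C A.
Proof. unfold ncol. intros H E. apply H. vsimpl in *. lra. Qed.
Lemma ncol_swap A B C : ncol A B C -> ncol A C B.
Proof. unfold ncol. intros H E. apply H. vsimpl in *. lra. Qed.

Lemma pol_sym X P : pol X P = pol P X.
Proof. unfold pol; ring. Qed.

Lemma dpol_scale X s u : dpol X (vscale s u) = s * dpol X u.
Proof. unfold dpol; vsimpl; ring. Qed.

Lemma pol_shift X P Q : pol X Q = pol X P + dpol X (vsub Q P).
Proof. unfold pol, dpol; vsimpl; ring. Qed.

Lemma dpol_of_pol X P Q : pol X P = 0 -> pol X Q = 0 -> dpol X (vsub Q P) = 0.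
Proof. rewrite (pol_shift X P Q). lra. Qed.

Lemma pol_add_dir X P d : pol X P = 0 -> dpol X d = 0 -> pol X (vadd P d) = 0.
Proof.
  intros h1 h2. replace (pol X (vadd P d)) with (pol X P + dpol X d) by (unfold pol, dpol; vsimpl; ring).
  lra.
Qed.

Lemma top_neq_of_ncol A B C : ncol A B C -> top A <> top B.
Proof. intros H E. injection E as Ex Ey. apply H; unfold ncol; vsimpl; unfold vx, vy in *; rewrite Ex, Ey; ring. Qed.

Lemma dpol_top_neq0 A Y : dpol A Y = 0 -> Y <> vzero -> top Y <> (0, 0).
Proof.
  intros h hY E. injection E as Ex Ey. unfold dpol in h. rewrite Ex, Ey in h.
  apply hY, vec3_eq; unfold vzero, mk3; [exact Ex | exact Ey | cbn; lra].
Qed.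

Lemma dpol2_det0 A B X Y : top A <> top B ->
  dpol A X = 0 -> dpol B X = 0 -> dpol A Y = 0 -> dpol B Y = 0 -> det3 e3 X Y = 0.
Proof.
  intros Hab hAX hBX hAY hBY.
  assert (gX : (vx A - vx B) * vx X + (vy A - vy B) * vy X = 0) by (unfold dpol in *; lra).
  assert (gY : (vx A - vx B) * vx Y + (vy A - vy B) * vy Y = 0) by (unfold dpol in *; lra).
  assert (Ia : (vx A - vx B) * det3 e3 X Y =
     vy Y * ((vx A - vx B) * vx X + (vy A - vy B) * vy X)
     - vy X * ((vx A - vx B) * vx Y + (vy A - vy B) * vy Y)) by (vsimpl; ring).
  assert (Ib : (vy A - vy B) * det3 e3 X Y =
     vx X * ((vx A - vx B) * vx Y + (vy A - vy B) * vy Y)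
     - vx Y * ((vx A - vx B) * vx X + (vy A - vy B) * vy X)) by (vsimpl; ring).
  rewrite gX, gY in Ia, Ib.
  destruct (Req_dec (vx A - vx B) 0) as [Ex|Ex].
  - assert (Ey : vy A - vy B <> 0) by (intro; apply Hab; unfold top; f_equal; lra).
    apply (Rmult_eq_reg_l (vy A - vy B)); [lra | exact Ey].
  - apply (Rmult_eq_reg_l (vx A - vx B)); [lra | exact Ex].
Qed.

Lemma dpol_det0_parallel A X Y :
  dpol A X = 0 -> dpol A Y = 0 -> det3 e3 X Y = 0 -> Y <> vzero -> exists c, X = vscale c Y.
Proof.
  intros hAX hAY Hd hY.
  rewrite det3_e3 in Hd.
  assert (exists c, vx X = c * vx Y /\ vy X = c * vy Y) as [c [cx cy]].
  { destruct (Req_dec (vx Y) 0) as [Hx|Hx].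
    - assert (Hy : vy Y <> 0) by (intro; apply (dpol_top_neq0 A Y hAY hY); unfold top; f_equal; auto).
      exists (vy X / vy Y). split; field_simplify; auto. rewrite Hx in Hd |- *. nra.
    - exists (vx X / vx Y). split; field_simplify; auto. apply (Rmult_eq_reg_l (vx Y)); auto.
      field_simplify; auto. nra. }
  exists c. unfold dpol in *. apply vec3_eq; vsimpl; unfold vx, vy, vz in *; simpl in *; nra.
Qed.

Lemma dpol2_parallel A B X Y : top A <> top B ->
  dpol A X = 0 -> dpol B X = 0 -> dpol A Y = 0 -> dpol B Y = 0 -> Y <> vzero ->
  exists c, X = vscale c Y.
Proof.
  intros Hab hAX hBX hAY hBY. apply (dpol_det0_parallel A); auto.
  exact (dpol2_det0 A B X Y Hab hAX hBX hAY hBY).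
Qed.

Lemma dpol3_zero A B C W : ncol A B C ->
  dpol A W = 0 -> dpol B W = 0 -> dpol C W = 0 -> W = vzero.
Proof.
  intros Hk hA hB hC. unfold ncol in Hk. set (k := det3 e3 (vsub B A) (vsub C A)) in Hk.
  assert (Ex : vx W * k = (dpol B W - dpol A W) * (vy C - vy A) - (dpol C W - dpol A W) * (vy B - vy A))
    by (unfold k, dpol; vsimpl; ring).
  assert (Ey : vy W * k = (dpol C W - dpol A W) * (vx B - vx A) - (dpol B W - dpol A W) * (vx C - vx A))
    by (unfold k, dpol; vsimpl; ring).
  rewrite hA, hB, hC in Ex, Ey.
  assert (wx : vx W = 0) by (apply (Rmult_eq_reg_r k); auto; lra).
  assert (wy : vy W = 0) by (apply (Rmult_eq_reg_r k); auto; lra).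
  unfold dpol in hA. rewrite wx, wy in hA. apply vec3_eq; vsimpl; unfold vx, vy, vz in *; lra.
Qed.

Lemma pol3_unique A B C P Q : ncol A B C ->
  pol A P = 0 -> pol B P = 0 -> pol C P = 0 -> pol A Q = 0 -> pol B Q = 0 -> pol C Q = 0 -> P = Q.
Proof.
  intros Hk a1 b1 c1 a2 b2 c2.
  pose proof (dpol3_zero A B C (vsub P Q) Hk
    (dpol_of_pol _ _ _ a2 a1) (dpol_of_pol _ _ _ b2 b1) (dpol_of_pol _ _ _ c2 c1)) as E.
  apply vec3_eq; [apply (f_equal vx) in E | apply (f_equal vy) in E | apply (f_equal vz) in E];
    vsimpl in *; lra.
Qed.

Lemma dpol_det_neq0 A B C X Y : ncol A B C ->
  dpol A X = 0 -> dpol B X = 0 -> dpol A Y = 0 -> dpol C Y = 0 -> X <> vzero -> Y <> vzero ->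
  det3 e3 X Y <> 0.
Proof.
  intros Hk hAX hBX hAY hCY hX hY E.
  rewrite det3_e3_swap in E.
  destruct (dpol_det0_parallel A Y X hAY hAX ltac:(lra) hX) as [c ->].
  apply hY, (dpol3_zero A B C); auto. rewrite dpol_scale, hBX; ring.
Qed.

(** The dual point of the plane through X spanned by u and v (meaningful when
    that plane is not isotropic, [det3 e3 u v <> 0]). *)
Definition plane_dual (u v X : vec3) : vec3 :=
  vscale (- / det3 e3 u v) (mk3 (det3 e1 u v) (det3 e2 u v) (det3 X u v)).

Lemma T_point_plane_dual a b sigma i j X :
  T_point a b sigma i j X = plane_dual (vsub (b (S j)) (b j)) (Delta a b sigma i j) X.
Proof. reflexivity. Qed.

Lemma top_plane_dual u v X X' : top (plane_dual u v X) = top (plane_dual u v X').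
Proof. unfold top, plane_dual; vsimpl. f_equal; ring. Qed.

Lemma vz_plane_dual u v X : vz (plane_dual u v X) = - / det3 e3 u v * det3 X u v.
Proof. reflexivity. Qed.

Lemma dpol_plane_dual u v X d : det3 e3 u v <> 0 ->
  dpol (plane_dual u v X) d = - dot d (cross u v) / det3 e3 u v.
Proof. intro H. unfold dpol, plane_dual. vsimpl. field. vsimpl in *. lra. Qed.

Lemma pol_plane_dual u v X : det3 e3 u v <> 0 -> pol (plane_dual u v X) X = 0.
Proof. intro H. unfold pol, plane_dual. vsimpl. field. vsimpl in *. lra. Qed.

Lemma pol_plane_dual_span u v X Y s r : det3 e3 u v <> 0 ->
  vsub Y X = vadd (vscale s u) (vscale r v) -> pol (plane_dual u v X) Y = 0.
Proof.
  intros H E. rewrite (pol_shift _ X Y), pol_plane_dual, E, dpol_plane_dual by exact H.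
  replace (dot (vadd (vscale s u) (vscale r v)) (cross u v)) with 0 by (vsimpl; ring).
  unfold Rdiv. ring.
Qed.

Lemma plane_dual_unique u v X F : det3 e3 u v <> 0 ->
  pol F X = 0 -> dpol F u = 0 -> dpol F v = 0 -> F = plane_dual u v X.
Proof.
  intros H hX hu hv.
  assert (uz : vz u = vx F * vx u + vy F * vy u) by (unfold dpol in hu; lra).
  assert (vz' : vz v = vx F * vx v + vy F * vy v) by (unfold dpol in hv; lra).
  assert (Fz : vz F = vx F * vx X + vy F * vy X - vz X) by (unfold pol in hX; lra).
  assert (Ex : det3 e1 u v = - vx F * det3 e3 u v) by (vsimpl; unfold vx, vy, vz in *; rewrite uz, vz'; ring).
  assert (Ey : det3 e2 u v = - vy F * det3 e3 u v) by (vsimpl; unfold vx, vy, vz in *; rewrite uz, vz'; ring).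
  assert (Ez : det3 X u v = - vz F * det3 e3 u v)
    by (rewrite Fz; vsimpl; unfold vx, vy, vz in *; rewrite uz, vz'; ring).
  unfold plane_dual. rewrite Ex, Ey, Ez.
  apply vec3_eq; unfold vscale, mk3, vx, vy, vz; simpl; field; exact H.
Qed.

Definition face_on (F : net_of) (i j : nat) (P : vec3) : Prop :=
  pol (F i j) P = 0 /\ pol (F (S i) j) P = 0 /\ pol (F (S i) (S j)) P = 0 /\ pol (F i (S j)) P = 0.

Definition dual_normal (P : vec3) : vec3 := mk3 (- vx P) (- vy P) 1.

Lemma dpol_edge A B P : pol A P = 0 -> pol B P = 0 -> dpol P (vsub B A) = 0.
Proof. rewrite !(pol_sym _ P). apply dpol_of_pol. Qed.

Lemma cross_dual_plane u v P : dpol P u = 0 -> dpol P v = 0 ->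
  cross u v = vscale (det3 e3 u v) (dual_normal P).
Proof.
  unfold dpol, dual_normal; intros Hu Hv.
  assert (uz : vz u = vx P * vx u + vy P * vy u) by lra.
  assert (vz' : vz v = vx P * vx v + vy P * vy v) by lra.
  apply vec3_eq; vsimpl; unfold vx, vy, vz in uz, vz'; rewrite ?uz, ?vz'; ring.
Qed.

Lemma det3_dual_plane u v w P : dpol P u = 0 -> dpol P v = 0 -> dpol P w = 0 -> det3 u v w = 0.
Proof.
  intros hu hv hw. unfold det3. rewrite (cross_dual_plane v w P hv hw).
  replace (dot u (vscale (det3 e3 v w) (dual_normal P))) with (- det3 e3 v w * dpol P u)
    by (unfold dpol, dual_normal; vsimpl; ring).
  rewrite hu. ring.
Qed.

Lemma convex_quad_dual_plane A B C D P :
  pol A P = 0 -> pol B P = 0 -> pol C P = 0 -> pol D P = 0 ->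
  let d1 := det3 e3 (vsub B A) (vsub C B) in let d2 := det3 e3 (vsub C B) (vsub D C) in
  let d3 := det3 e3 (vsub D C) (vsub A D) in let d4 := det3 e3 (vsub A D) (vsub B A) in
  convex_quad A B C D <-> 0 < d1 * d1 /\ 0 < d1 * d2 /\ 0 < d1 * d3 /\ 0 < d1 * d4.
Proof.
  intros hA hB hC hD d1 d2 d3 d4. unfold convex_quad. cbv zeta.
  pose proof (dpol_edge _ _ _ hA hB) as eAB. pose proof (dpol_edge _ _ _ hB hC) as eBC.
  pose proof (dpol_edge _ _ _ hC hD) as eCD. pose proof (dpol_edge _ _ _ hD hA) as eDA.
  rewrite (cross_dual_plane _ _ P eAB eBC), (cross_dual_plane _ _ P eBC eCD),
          (cross_dual_plane _ _ P eCD eDA), (cross_dual_plane _ _ P eDA eAB).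
  fold d1 d2 d3 d4.
  assert (Hn : forall x y, dot (vscale x (dual_normal P)) (vscale y (dual_normal P))
                           = x * y * (vx P ^ 2 + vy P ^ 2 + 1)) by (intros; unfold dual_normal; vsimpl; ring).
  rewrite !Hn.
  assert (Hq : 0 < vx P ^ 2 + vy P ^ 2 + 1) by nra.
  assert (Hpos : forall x, 0 < x * (vx P ^ 2 + vy P ^ 2 + 1) <-> 0 < x).
  { intro x. split; intro H; [|nra]. destruct (Rlt_or_le 0 x); [auto | nra]. }
  rewrite !Hpos.
  assert (eAC : dpol P (vsub C A) = 0) by (apply dpol_edge; auto).
  assert (eAD : dpol P (vsub D A) = 0) by (apply dpol_edge; auto).
  rewrite (det3_dual_plane _ _ _ P eAB eAC eAD).
  tauto.
Qed.

Lemma convex_quad_ncol A B C D P :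
  pol A P = 0 -> pol B P = 0 -> pol C P = 0 -> pol D P = 0 -> convex_quad A B C D ->
  ncol A B D /\ ncol B C A /\ ncol C D B /\ ncol D A C.
Proof.
  intros hA hB hC hD Hc. apply (convex_quad_dual_plane A B C D P hA hB hC hD) in Hc.
  cbv zeta in Hc. destruct Hc as [H1 [H2 [H3 H4]]]. unfold ncol.
  replace (det3 e3 (vsub B A) (vsub D A)) with (det3 e3 (vsub A D) (vsub B A)) by (vsimpl; ring).
  replace (det3 e3 (vsub C B) (vsub A B)) with (det3 e3 (vsub B A) (vsub C B)) by (vsimpl; ring).
  replace (det3 e3 (vsub D C) (vsub B C)) with (det3 e3 (vsub C B) (vsub D C)) by (vsimpl; ring).
  replace (det3 e3 (vsub A D) (vsub C D)) with (det3 e3 (vsub D C) (vsub A D)) by (vsimpl; ring).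
  repeat split; intro E; rewrite E in *; lra.
Qed.

Lemma det3_e3_vsub_top A B C D A' B' C' D' :
  top A' = top A -> top B' = top B -> top C' = top C -> top D' = top D ->
  det3 e3 (vsub B' A') (vsub D' C') = det3 e3 (vsub B A) (vsub D C).
Proof.
  unfold top; intros Ea Eb Ec Ed. injection Ea as Ea1 Ea2. injection Eb as Eb1 Eb2.
  injection Ec as Ec1 Ec2. injection Ed as Ed1 Ed2.
  vsimpl. unfold vx, vy in *. rewrite Ea1, Ea2, Eb1, Eb2, Ec1, Ec2, Ed1, Ed2. ring.
Qed.

Lemma convex_quad_top A B C D A' B' C' D' P P' :
  pol A P = 0 -> pol B P = 0 -> pol C P = 0 -> pol D P = 0 ->
  pol A' P' = 0 -> pol B' P' = 0 -> pol C' P' = 0 -> pol D' P' = 0 ->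
  top A' = top A -> top B' = top B -> top C' = top C -> top D' = top D ->
  convex_quad A B C D -> convex_quad A' B' C' D'.
Proof.
  intros hA hB hC hD hA' hB' hC' hD' Ea Eb Ec Ed.
  rewrite (convex_quad_dual_plane A B C D P), (convex_quad_dual_plane A' B' C' D' P') by auto.
  cbv zeta. rewrite (det3_e3_vsub_top A B B C A' B' B' C'), (det3_e3_vsub_top B C C D B' C' C' D'),
    (det3_e3_vsub_top C D D A C' D' D' A'), (det3_e3_vsub_top D A A B D' A' A' B') by auto.
  tauto.
Qed.

Definition iso_shear (P P' : vec3) : vec3 -> vec3 :=
  iso_cong 0 (vx P' - vx P) (vy P' - vy P) (mk3 0 0 (vz P - vz P')).

Lemma iso_shear_dual X Y P P' : pol X P = 0 -> pol Y P' = 0 -> top Y = top X ->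
  Y = iso_shear P P' X.
Proof.
  unfold iso_shear, iso_cong, top, pol. rewrite cos_0, sin_0. intros hX hY E. injection E as Ex Ey.
  apply vec3_eq; unfold mk3, vx, vy, vz in *; simpl in *; rewrite ?Ex, ?Ey in *; nra.
Qed.

Lemma faces_iso_congruent_dual F G i j P P' : face_on F i j P -> face_on G i j P' ->
  top (G i j) = top (F i j) -> top (G (S i) j) = top (F (S i) j) ->
  top (G (S i) (S j)) = top (F (S i) (S j)) -> top (G i (S j)) = top (F i (S j)) ->
  faces_iso_congruent F G i j.
Proof.
  intros [f1 [f2 [f3 f4]]] [g1 [g2 [g3 g4]]] E1 E2 E3 E4.
  exists 0, (vx P' - vx P), (vy P' - vy P), (mk3 0 0 (vz P - vz P')).
  repeat split; apply iso_shear_dual; auto.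
Qed.

Lemma dual_top_face (H : net_of) i j P :
  pol (H i j) P = 0 -> pol (H (S i) j) P = 0 -> pol (H i (S j)) P = 0 ->
  ncol (H i j) (H (S i) j) (H i (S j)) -> dual_top H i j = top P.
Proof.
  intros h1 h2 h3 hk. unfold dual_top, ncol in *.
  rewrite (cross_dual_plane _ _ P (dpol_edge _ _ _ h1 h2) (dpol_edge _ _ _ h1 h3)).
  unfold dual_normal, top. vsimpl. f_equal; field; intro E; apply hk; vsimpl; lra.
Qed.

(** * The deformation *)

Definition rad (sigma : nat -> R) (t : R) (k : nat) : R := sqrt (t + sigma k ^ 2).

Lemma rad_pos sigma t k : 0 <= t -> 0 < sigma k -> 0 < rad sigma t k.
Proof. intros. unfold rad. apply sqrt_lt_R0. nra. Qed.
Lemma rad_sqr sigma t k : 0 <= t -> rad sigma t k * rad sigma t k = t + sigma k ^ 2.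
Proof. intros. unfold rad. apply sqrt_sqrt. nra. Qed.
Lemma rad_0 sigma k : 0 < sigma k -> rad sigma 0 k = sigma k.
Proof. intros. unfold rad. rewrite Rplus_0_l. apply sqrt_pow2. lra. Qed.

Definition step_coef (sigma : nat -> R) (t : R) (k : nat) : R :=
  (sigma (S k) + sigma k) / (rad sigma t (S k) + rad sigma t k).

Lemma step_coef_mul sigma t i : 0 <= t -> 0 < sigma i -> 0 < sigma (S i) ->
  step_coef sigma t i * (rad sigma t (S i) + rad sigma t i) = sigma (S i) + sigma i.
Proof.
  intros. unfold step_coef. pose proof (rad_pos sigma t i H H0). pose proof (rad_pos sigma t (S i) H H1).
  field. lra.
Qed.

Lemma P_t_rad a b sigma i j t :
  P_t a b sigma i j t = vadd (vadd (a 0%nat)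
    (vsum1 (fun k => vscale ((sigma k + sigma (k - 1)%nat) / (rad sigma t k + rad sigma t (k - 1)%nat))
                            (vsub (a k) (a (k - 1)%nat))) i))
    (vscale (rad sigma t i) (b j)).
Proof. reflexivity. Qed.

Lemma P_t_step_i a b sigma i j t : 0 <= t -> 0 < sigma i -> 0 < sigma (S i) ->
  vsub (P_t a b sigma (S i) j t) (P_t a b sigma i j t) = vscale (step_coef sigma t i) (Delta a b sigma i j).
Proof.
  intros Ht H1 H2. rewrite !P_t_rad. cbn [vsum1]. replace (S i - 1)%nat with i by lia.
  pose proof (step_coef_mul sigma t i Ht H1 H2) as Hc. pose proof (rad_sqr sigma t i Ht).
  pose proof (rad_sqr sigma t (S i) Ht). pose proof (rad_pos sigma t i Ht H1).
  pose proof (rad_pos sigma t (S i) Ht H2). unfold step_coef in Hc |- *.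
  set (c := (sigma (S i) + sigma i) / (rad sigma t (S i) + rad sigma t i)) in *.
  assert (Hr : rad sigma t (S i) = rad sigma t i + c * (sigma (S i) - sigma i)).
  { apply (Rmult_eq_reg_r (rad sigma t (S i) + rad sigma t i)); [|lra].
    transitivity (rad sigma t i * (rad sigma t (S i) + rad sigma t i)
                  + (sigma (S i) - sigma i) * (c * (rad sigma t (S i) + rad sigma t i))); [|ring].
    rewrite Hc. nra. }
  unfold Delta. apply vec3_eq; vsimpl; rewrite Hr; ring.
Qed.

Lemma P_t_step_j a b sigma i j t :
  vsub (P_t a b sigma i (S j) t) (P_t a b sigma i j t) = vscale (rad sigma t i) (vsub (b (S j)) (b j)).
Proof. rewrite !P_t_rad. apply vec3_eq; vsimpl; ring. Qed.

Lemma P_t_0 a b sigma i j : (forall k, (k <= i)%nat -> 0 < sigma k) ->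
  P_t a b sigma i j 0 = vadd (a i) (vscale (sigma i) (b j)).
Proof.
  intros Hs. rewrite P_t_rad, rad_0 by (apply Hs; lia).
  assert (E : forall i', (i' <= i)%nat ->
    vsum1 (fun k => vscale ((sigma k + sigma (k - 1)%nat) / (rad sigma 0 k + rad sigma 0 (k - 1)%nat))
                           (vsub (a k) (a (k - 1)%nat))) i' = vsub (a i') (a 0%nat)).
  { induction i' as [|i' IH]; intros Hi.
    - apply vec3_eq; vsimpl; ring.
    - cbn [vsum1]. rewrite IH by lia. replace (S i' - 1)%nat with i' by lia.
      rewrite !rad_0 by (apply Hs; lia).
      pose proof (Hs i' ltac:(lia)). pose proof (Hs (S i') ltac:(lia)).
      replace ((sigma (S i') + sigma i') / (sigma (S i') + sigma i')) with 1 by (field; lra).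
      apply vec3_eq; vsimpl; ring. }
  rewrite E by lia. apply vec3_eq; vsimpl; ring.
Qed.

Lemma continuity_pt_ext (f g : R -> R) t : (forall x, f x = g x) -> continuity_pt f t -> continuity_pt g t.
Proof. intros E. apply (continuity_pt_locally_ext f g 1 t); [lra | auto]. Qed.

Lemma continuity_pt_cst c t : continuity_pt (fun _ => c) t.
Proof. apply continuity_pt_const. intros x y; reflexivity. Qed.

Lemma continuous_on_interval_of_pt (f : R -> R) a b :
  (forall t, a <= t <= b -> continuity_pt f t) -> continuous_on_interval f a b.
Proof.
  intros H t Ht e He. destruct (H t Ht e He) as [d [Hd H']]. exists d; split; [lra|].
  intros s Hs Hst. destruct (Req_dec s t) as [->|Hne].
  - unfold Rminus; rewrite Rplus_opp_r, Rabs_R0; lra.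
  - apply (H' s). split; [split; [exact I | auto] | exact Hst].
Qed.

Lemma continuity_pt_rad sigma k t : 0 <= t -> continuity_pt (fun t => rad sigma t k) t.
Proof.
  intros Ht. apply (continuity_pt_comp (fun t => t + sigma k ^ 2) sqrt).
  - apply continuity_pt_plus; [apply derivable_continuous_pt, derivable_pt_id | apply continuity_pt_cst].
  - apply continuity_pt_sqrt. nra.
Qed.

Lemma continuity_pt_dot_P_t a b sigma i j w t : 0 <= t -> (forall k, (k <= i)%nat -> 0 < sigma k) ->
  continuity_pt (fun t => dot (P_t a b sigma i j t) w) t.
Proof.
  intros Ht Hs.
  set (c := fun t k => (sigma k + sigma (k - 1)%nat) / (rad sigma t k + rad sigma t (k - 1)%nat)).
  assert (Hc : forall k, (1 <= k <= i)%nat -> continuity_pt (fun t => c t k) t).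
  { intros k Hk. apply continuity_pt_div.
    - apply continuity_pt_cst.
    - apply continuity_pt_plus; apply continuity_pt_rad; exact Ht.
    - pose proof (rad_pos sigma t k Ht (Hs k ltac:(lia))).
      pose proof (sqrt_pos (t + sigma (k - 1)%nat ^ 2)). unfold rad in *. lra. }
  assert (Hsum : forall i', (i' <= i)%nat -> continuity_pt (fun t =>
      dot (vsum1 (fun k => vscale (c t k) (vsub (a k) (a (k - 1)%nat))) i') w) t).
  { induction i' as [|i' IH]; intros Hi; cbn [vsum1].
    - apply continuity_pt_cst.
    - apply (continuity_pt_ext (fun t => dot (vsum1 (fun k => vscale (c t k) (vsub (a k) (a (k - 1)%nat))) i') w
                 + c t (S i') * dot (vsub (a (S i')) (a (S i' - 1)%nat)) w)).
      { intro x. rewrite dot_vadd, dot_vscale. reflexivity. }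
      apply continuity_pt_plus; [apply IH; lia|].
      apply continuity_pt_mult; [apply Hc; lia | apply continuity_pt_cst]. }
  apply (continuity_pt_ext (fun t => dot (a 0%nat) w
     + dot (vsum1 (fun k => vscale (c t k) (vsub (a k) (a (k - 1)%nat))) i) w + rad sigma t i * dot (b j) w)).
  { intro x. rewrite P_t_rad, !dot_vadd, dot_vscale. reflexivity. }
  apply continuity_pt_plus; [apply continuity_pt_plus; [apply continuity_pt_cst | apply Hsum; lia]|].
  apply continuity_pt_mult; [apply continuity_pt_rad; exact Ht | apply continuity_pt_cst].
Qed.

(** The curvature is the signed area of the top view of the dual quadrilateral,
    here a trapezoid. *)
Lemma curvature_dual_tops (H : net_of) i j p1 p2 p3 p4 k s s' u v :
  dual_top H (i - 1) (j - 1) = top p1 -> dual_top H i (j - 1) = top p2 ->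
  dual_top H i j = top p3 -> dual_top H (i - 1) j = top p4 ->
  vsub p2 p1 = vscale k u -> vsub p4 p1 = vscale s v -> vsub p3 p2 = vscale s' v ->
  curvature H i j = / 2 * (k * (s' + s)) * det3 e3 u v.
Proof.
  intros E1 E2 E3 E4 h2 h4 h3. unfold curvature. rewrite E1, E2, E3, E4.
  assert (p2e : p2 = vadd p1 (vscale k u)) by (rewrite <- h2; apply vec3_eq; vsimpl; ring).
  assert (p4e : p4 = vadd p1 (vscale s v)) by (rewrite <- h4; apply vec3_eq; vsimpl; ring).
  assert (p3e : p3 = vadd p2 (vscale s' v)) by (rewrite <- h3; apply vec3_eq; vsimpl; ring).
  subst p3. subst p2 p4. unfold top, det2. vsimpl. ring.
Qed.

Lemma dpol_congruent_shift X P P' phi c1 c2 beta :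
  top (iso_cong phi c1 c2 beta X) = top X -> pol X P = 0 -> pol (iso_cong phi c1 c2 beta X) P' = 0 ->
  dpol X (vsub (vsub P' P) (mk3 c1 c2 (- vz beta))) = 0.
Proof.
  intros E hX hY. injection E as Ex Ey.
  assert (Ez : vz (iso_cong phi c1 c2 beta X) = c1 * vx X + c2 * vy X + vz X + vz beta) by reflexivity.
  unfold pol in hX, hY. rewrite Ex, Ey, Ez in hY. unfold dpol. vsimpl. unfold vx, vy, vz in *. nra.
Qed.

Section Deformation.

Variables (m n : nat) (F : net_of) (a b : nat -> vec3) (sigma : nat -> R).
Hypothesis Hm : (1 <= m)%nat.
Hypothesis Hn : (2 <= n)%nat.
Hypothesis Hnet : is_net m n F.
Hypothesis Hsigma : forall k, (k <= S m)%nat -> 0 < sigma k.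
Hypothesis Hrep : forall i j, (i <= m)%nat -> (j <= n)%nat ->
  det3 e3 (vsub (b (S j)) (b j)) (Delta a b sigma i j) <> 0 /\
  F i j = T_point a b sigma i j (vadd (a i) (vscale (sigma i) (b j))).

Let G := T_family a b sigma.
Let P i j t := P_t a b sigma i j t.

Lemma T_family_0 i j : (i <= m)%nat -> (j <= n)%nat -> G 0 i j = F i j.
Proof.
  intros Hi Hj. destruct (Hrep i j Hi Hj) as [_ ->]. unfold G, T_family.
  rewrite P_t_0; [reflexivity|]. intros; apply Hsigma; lia.
Qed.

Lemma T_family_top t i j : (i <= m)%nat -> (j <= n)%nat -> top (G t i j) = top (F i j).
Proof.
  intros Hi Hj. rewrite <- (T_family_0 i j Hi Hj). unfold G, T_family.
  rewrite !T_point_plane_dual. apply top_plane_dual.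
Qed.

Lemma T_family_pol t i j i' j' : 0 <= t -> (i <= m)%nat -> (j <= n)%nat ->
  (i <= i' <= S i)%nat -> (j <= j' <= S j)%nat -> pol (G t i j) (P i' j' t) = 0.
Proof.
  intros Ht Hi Hj Hi' Hj'. destruct (Hrep i j Hi Hj) as [Hd _].
  assert (Hs0 : 0 < sigma i) by (apply Hsigma; lia). assert (Hs1 : 0 < sigma (S i)) by (apply Hsigma; lia).
  unfold G, T_family. rewrite T_point_plane_dual.
  apply (pol_plane_dual_span _ _ _ _ (if Nat.eq_dec j' j then 0 else rad sigma t i')
                                      (if Nat.eq_dec i' i then 0 else step_coef sigma t i)); auto.
  unfold P. destruct (Nat.eq_dec i' i) as [->|Ei], (Nat.eq_dec j' j) as [->|Ej].
  - apply vec3_eq; vsimpl; ring.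
  - replace j' with (S j) by lia. rewrite P_t_step_j. apply vec3_eq; vsimpl; ring.
  - replace i' with (S i) by lia. rewrite P_t_step_i by auto. apply vec3_eq; vsimpl; ring.
  - replace i' with (S i) by lia. replace j' with (S j) by lia.
    replace (vsub (P_t a b sigma (S i) (S j) t) (P_t a b sigma i j t))
      with (vadd (vsub (P_t a b sigma (S i) (S j) t) (P_t a b sigma (S i) j t))
                 (vsub (P_t a b sigma (S i) j t) (P_t a b sigma i j t))) by (apply vec3_eq; vsimpl; ring).
    rewrite P_t_step_i, P_t_step_j by auto. apply vec3_eq; vsimpl; ring.
Qed.

Lemma T_family_face_on t i j : 0 <= t -> (i < m)%nat -> (j < n)%nat ->
  face_on (G t) i j (P (S i) (S j) t).
Proof. intros Ht Hi Hj. repeat split; apply T_family_pol; auto; lia. Qed.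

Lemma face_ncol i j : (i < m)%nat -> (j < n)%nat -> ncol (F i j) (F (S i) j) (F i (S j)).
Proof.
  intros Hi Hj. destruct (T_family_face_on 0 i j ltac:(lra) Hi Hj) as [f1 [f2 [f3 f4]]].
  rewrite !T_family_0 in f1, f2, f3, f4 by lia.
  apply (convex_quad_ncol _ _ _ _ _ f1 f2 f3 f4 (Hnet i j Hi Hj)).
Qed.

Lemma T_family_face_ncol t i j : (i < m)%nat -> (j < n)%nat ->
  ncol (G t i j) (G t (S i) j) (G t i (S j)).
Proof.
  intros Hi Hj. unfold ncol.
  rewrite (det3_e3_vsub_top (F i j) (F (S i) j) (F i j) (F i (S j))) by (apply T_family_top; lia).
  apply face_ncol; auto.
Qed.

Lemma T_family_dual_top t i j : 0 <= t -> (i < m)%nat -> (j < n)%nat ->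
  dual_top (G t) i j = top (P (S i) (S j) t).
Proof.
  intros Ht Hi Hj. destruct (T_family_face_on t i j Ht Hi Hj) as [h1 [h2 [_ h4]]].
  apply dual_top_face; auto. apply T_family_face_ncol; auto.
Qed.

Lemma T_family_curvature t i j : 0 <= t -> (1 <= i < m)%nat -> (1 <= j < n)%nat ->
  curvature (G t) i j = / 2 * (sigma (S i) + sigma i) * det3 e3 (Delta a b sigma i j) (vsub (b (S j)) (b j)).
Proof.
  intros Ht Hi Hj. rewrite <- (step_coef_mul sigma t i Ht) by (apply Hsigma; lia).
  apply (curvature_dual_tops _ _ _ (P i j t) (P (S i) j t) (P (S i) (S j) t) (P i (S j) t)).
  - replace i with (S (i - 1)) at 2 by lia. replace j with (S (j - 1)) at 2 by lia.
    apply T_family_dual_top; auto; lia.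
  - replace j with (S (j - 1)) at 2 by lia. apply T_family_dual_top; auto; lia.
  - apply T_family_dual_top; auto; lia.
  - replace i with (S (i - 1)) at 2 by lia. apply T_family_dual_top; auto; lia.
  - apply P_t_step_i; auto; apply Hsigma; lia.
  - apply P_t_step_j.
  - apply P_t_step_j.
Qed.

Lemma T_family_continuous i j : (i <= m)%nat -> (j <= n)%nat ->
  continuous_on_interval (fun t => vx (G t i j)) 0 1 /\
  continuous_on_interval (fun t => vy (G t i j)) 0 1 /\
  continuous_on_interval (fun t => vz (G t i j)) 0 1.
Proof.
  intros Hi Hj.
  assert (Htop : forall t, top (G t i j) = top (F i j)) by (intro; apply T_family_top; auto).
  repeat split; apply continuous_on_interval_of_pt; intros t Ht.
  - apply (continuity_pt_ext (fun _ => vx (F i j))); [|apply continuity_pt_cst].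
    intro x. specialize (Htop x). injection Htop; auto.
  - apply (continuity_pt_ext (fun _ => vy (F i j))); [|apply continuity_pt_cst].
    intro x. specialize (Htop x). injection Htop; auto.
  - set (u := vsub (b (S j)) (b j)). set (v := Delta a b sigma i j).
    apply (continuity_pt_ext (fun t => - / det3 e3 u v * dot (P i j t) (cross u v))).
    { intro x. unfold G, T_family. rewrite T_point_plane_dual, vz_plane_dual. reflexivity. }
    apply continuity_pt_mult; [apply continuity_pt_cst|].
    apply continuity_pt_dot_P_t; [lra|]. intros; apply Hsigma; lia.
Qed.

Lemma T_family_isometric : iso_isometric_deformation m n F 1 G.
Proof.
  split; [exact T_family_0|]. split; [exact T_family_continuous|]. split; [|split].
  - intros t Ht i j Hi Hj.
    destruct (T_family_face_on 0 i j ltac:(lra) Hi Hj) as [f1 [f2 [f3 f4]]].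
    rewrite !T_family_0 in f1, f2, f3, f4 by lia.
    destruct (T_family_face_on t i j ltac:(lra) Hi Hj) as [g1 [g2 [g3 g4]]].
    apply (convex_quad_top _ _ _ _ _ _ _ _ _ _ f1 f2 f3 f4 g1 g2 g3 g4); try (apply T_family_top; lia).
    apply Hnet; auto.
  - intros t Ht i j Hi Hj.
    pose proof (T_family_face_on 0 i j ltac:(lra) Hi Hj) as HF.
    unfold face_on in HF. rewrite !T_family_0 in HF by lia.
    apply (faces_iso_congruent_dual _ _ _ _ _ _ HF (T_family_face_on t i j ltac:(lra) Hi Hj));
      apply T_family_top; lia.
  - intros t Ht i j Hi1 Hi Hj1 Hj.
    assert (HF : forall k l, (k < m)%nat -> (l < n)%nat -> dual_top F k l = dual_top (G 0) k l).
    { intros k l Hk Hl. unfold dual_top. rewrite !T_family_0 by lia. reflexivity. }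
    unfold curvature at 2. rewrite !HF by lia. fold (curvature (G 0) i j).
    rewrite !T_family_curvature by (lra || lia). reflexivity.
Qed.

(** A congruence taking [F] to [G 1] would make [P_t i j 1 - P_t i j 0] independent
    of (i, j), but the column edges of [P_t] are scaled by [rad sigma t i / sigma i]. *)
Lemma T_family_not_congruence :
  ~ exists phi c1 c2 beta, forall i j, (i <= m)%nat -> (j <= n)%nat -> G 1 i j = iso_cong phi c1 c2 beta (F i j).
Proof.
  intros [phi [c1 [c2 [beta Hc]]]].
  set (W i' j' := vsub (vsub (P i' j' 1) (P i' j' 0)) (mk3 c1 c2 (- vz beta))).
  assert (HW : forall i j i' j', (i <= m)%nat -> (j <= n)%nat -> (i <= i' <= S i)%nat -> (j <= j' <= S j)%nat ->
            dpol (F i j) (W i' j') = 0).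
  { intros i j i' j' Hi Hj Hi' Hj'. apply (dpol_congruent_shift _ _ _ phi).
    - rewrite <- Hc by lia. apply T_family_top; lia.
    - rewrite <- T_family_0 by lia. apply T_family_pol; auto; lra || lia.
    - rewrite <- Hc by lia. apply T_family_pol; auto; lra || lia. }
  assert (Hface : forall i j, (i < m)%nat -> (j < n)%nat -> W (S i) (S j) = vzero).
  { intros i j Hi Hj. apply (dpol3_zero _ _ _ _ (face_ncol i j Hi Hj)); apply HW; auto; lia. }
  pose proof (Hface 0%nat 0%nat ltac:(lia) ltac:(lia)) as W11.
  pose proof (Hface 0%nat 1%nat ltac:(lia) ltac:(lia)) as W12.
  assert (Hs1 : 0 < sigma 1%nat) by (apply Hsigma; lia).
  assert (Hrad : rad sigma 1 1 <> sigma 1%nat).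
  { intro E. pose proof (rad_sqr sigma 1 1 ltac:(lra)). rewrite E in H. nra. }
  assert (Hdb : vscale (rad sigma 1 1 - sigma 1%nat) (vsub (b 2%nat) (b 1%nat)) = vzero).
  { pose proof (P_t_step_j a b sigma 1 1 1) as k1. pose proof (P_t_step_j a b sigma 1 1 0) as k0.
    rewrite rad_0 in k0 by exact Hs1. unfold W, P in W11, W12.
    apply vec3_eq; [apply (f_equal vx) in k1, k0, W11, W12 | apply (f_equal vy) in k1, k0, W11, W12
      | apply (f_equal vz) in k1, k0, W11, W12]; vsimpl in *; nra. }
  assert (Hb : vsub (b 2%nat) (b 1%nat) = vzero).
  { apply vec3_eq; apply (Rmult_eq_reg_l (rad sigma 1 1 - sigma 1%nat)); try lra;
    [apply (f_equal vx) in Hdb | apply (f_equal vy) in Hdb | apply (f_equal vz) in Hdb]; vsimpl in *; lra. }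
  destruct (Hrep 0%nat 1%nat ltac:(lia) ltac:(lia)) as [Hd _]. apply Hd. rewrite Hb. vsimpl. ring.
Qed.

Lemma T_family_nontrivial : nontrivial_deformation m n F 1 G.
Proof.
  split; [exact T_family_isometric|]. intros Hall. apply T_family_not_congruence.
  destruct (Hall 1 ltac:(lra)) as [phi [c1 [c2 [beta Hc]]]]. eauto.
Qed.

End Deformation.

(** * Dual nets *)

(** [D k l] is the dual point of the face [p_kl]; the sign conditions on
    parallel dual edges come from the convexity of the 4-hedral angles. *)
Record dual_net (m n : nat) (F : net_of) (D : nat -> nat -> vec3) : Prop := {
  dn_m : (2 <= m)%nat;
  dn_n : (2 <= n)%nat;
  dn_net : is_net m n F;
  dn_face : forall k l, (k < m)%nat -> (l < n)%nat -> face_on F k l (D k l);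
  dn_adj_j : forall k l, (k < m)%nat -> (S l < n)%nat -> D k l <> D k (S l);
  dn_adj_i : forall k l, (S k < m)%nat -> (l < n)%nat -> D k l <> D (S k) l;
  dn_sign_j : forall i j u al be, (S i < m)%nat -> (S j < n)%nat ->
    vsub (D i (S j)) (D i j) = vscale al u -> vsub (D (S i) (S j)) (D (S i) j) = vscale be u ->
    0 < al * be;
  dn_sign_i : forall i j u al be, (S i < m)%nat -> (S j < n)%nat ->
    vsub (D (S i) j) (D i j) = vscale al u -> vsub (D (S i) (S j)) (D i (S j)) = vscale be u ->
    0 < al * be }.

Lemma row_in_plane n F i : in_some_plane (line_i n F i) ->
  exists M e, M <> vzero /\ forall j, (j <= n)%nat -> dot M (F i j) = e.
Proof. intros [N [d [HN H]]]. exists N, d. split; auto. intros j Hj. apply H. exists j; auto. Qed.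

Lemma column_direction m F j : in_some_isotropic_plane (line_j m F j) ->
  exists u, u <> vzero /\ forall i, (i <= m)%nat -> dpol (F i j) u = 0.
Proof.
  intros [N [d [HN [Hz H]]]]. exists (mk3 (vx N) (vy N) d). split.
  - intro E. apply HN. apply (f_equal vx) in E as ex. apply (f_equal vy) in E as ey.
    apply vec3_eq; vsimpl in *; auto.
  - intros i Hi. pose proof (H (F i j) (ex_intro _ i (conj Hi eq_refl))) as E.
    unfold dpol; vsimpl in *. rewrite Hz in E. lra.
Qed.

(** A direction of the line joining P to the dual point of the plane
    [{X | dot M X = e}], homogenized so that vertical planes are allowed. *)
Definition pole_dir (M : vec3) (e : R) (P : vec3) : vec3 := vadd (mk3 (vx M) (vy M) e) (vscale (vz M) P).

Lemma dpol_pole_dir M e P X : dot M X = e -> pol X P = 0 -> dpol X (pole_dir M e P) = 0.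
Proof.
  unfold pole_dir, pol, dpol, dot; intros hM hP. vsimpl. unfold vx, vy, vz in *.
  transitivity (snd M * (fst (fst X) * fst (fst P) + snd (fst X) * snd (fst P) - snd X - snd P)); [lra | ].
  rewrite hP; ring.
Qed.

Lemma pole_dir_eq0 M e P X : M <> vzero -> pole_dir M e P = vzero -> dot M X = e -> pol X P = 0.
Proof.
  intros HM HR HX.
  pose proof (f_equal vx HR) as rx. pose proof (f_equal vy HR) as ry. pose proof (f_equal vz HR) as rz.
  unfold pole_dir in rx, ry, rz. vsimpl in *.
  assert (Hz : snd M <> 0).
  { intro Hz. apply HM. rewrite Hz in rx, ry, rz. apply vec3_eq; vsimpl; lra. }
  unfold pol. unfold vx, vy, vz. apply (Rmult_eq_reg_l (snd M)); auto. nra.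
Qed.

Lemma pole_dir_sub M e P Q : vsub (pole_dir M e P) (pole_dir M e Q) = vscale (vz M) (vsub P Q).
Proof. unfold pole_dir; apply vec3_eq; vsimpl; ring. Qed.

Definition row_scale (D : nat -> nat -> vec3) (k : nat) : R :=
  dot (vsub (D k 1%nat) (D k 0%nat)) (vsub (D 0%nat 1%nat) (D 0%nat 0%nat)) /
  dot (vsub (D 0%nat 1%nat) (D 0%nat 0%nat)) (vsub (D 0%nat 1%nat) (D 0%nat 0%nat)).

Definition shrink (z : R) : R := / (2 * (1 + Rabs z)).

Lemma shrink_pos z : 0 < shrink z /\ 0 < 1 + shrink z * z.
Proof.
  unfold shrink. pose proof (Rabs_pos z). pose proof (Rle_abs (- z)). rewrite Rabs_Ropp in H0.
  assert (H1 : / (2 * (1 + Rabs z)) * (2 * (1 + Rabs z)) = 1) by (field; lra).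
  assert (H2 : 0 < / (2 * (1 + Rabs z))) by (apply Rinv_0_lt_compat; lra).
  split; [exact H2 | nra].
Qed.

Lemma Delta_ext a b sigma i j : Delta a b sigma i j =
  vsub (vadd (a (S i)) (vscale (sigma (S i)) (b j))) (vadd (a i) (vscale (sigma i) (b j))).
Proof. unfold Delta; apply vec3_eq; vsimpl; ring. Qed.

Lemma det_Delta_succ a b sigma i j :
  det3 e3 (vsub (b (S j)) (b j)) (Delta a b sigma i (S j)) = det3 e3 (vsub (b (S j)) (b j)) (Delta a b sigma i j).
Proof. unfold Delta. vsimpl. ring. Qed.

Section DualNet.

Variables (m n : nat) (F : net_of) (D : nat -> nat -> vec3).
Hypothesis HD : dual_net m n F D.

Lemma dn_ncol k l : (k < m)%nat -> (l < n)%nat ->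
  ncol (F k l) (F (S k) l) (F k (S l)) /\ ncol (F (S k) l) (F (S k) (S l)) (F k l) /\
  ncol (F (S k) (S l)) (F k (S l)) (F (S k) l) /\ ncol (F k (S l)) (F k l) (F (S k) (S l)).
Proof.
  intros Hk Hl. destruct (dn_face _ _ _ _ HD k l Hk Hl) as [h1 [h2 [h3 h4]]].
  exact (convex_quad_ncol _ _ _ _ _ h1 h2 h3 h4 (dn_net _ _ _ _ HD k l Hk Hl)).
Qed.

Lemma dn_row_not_on_face k l i : (k < m)%nat -> (l < n)%nat -> (i = k \/ i = S k) ->
  ~ (forall j, (j <= n)%nat -> pol (F i j) (D k l) = 0).
Proof.
  intros Hk Hl Hi Hrow. pose proof (dn_n _ _ _ _ HD).
  destruct (dn_face _ _ _ _ HD k l Hk Hl) as [h1 [h2 [h3 h4]]].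
  destruct (Compare_dec.lt_dec (S l) n) as [Hl'|Hl'].
  - apply (dn_adj_j _ _ _ _ HD k l Hk Hl').
    destruct (dn_face _ _ _ _ HD k (S l) Hk Hl') as [g1 [g2 [g3 g4]]].
    destruct (dn_ncol k (S l) Hk Hl') as [c1 [c2 _]].
    destruct Hi as [-> | ->].
    + apply (pol3_unique _ _ _ _ _ c1); auto; apply Hrow; lia.
    + apply (pol3_unique _ _ _ _ _ (ncol_swap _ _ _ (ncol_rot _ _ _ (ncol_rot _ _ _ c2)))); auto;
      apply Hrow; lia.
  - destruct l as [|l0]; [lia|]. apply (dn_adj_j _ _ _ _ HD k l0 Hk Hl).
    destruct (dn_face _ _ _ _ HD k l0 Hk ltac:(lia)) as [g1 [g2 [g3 g4]]].
    destruct (dn_ncol k l0 Hk ltac:(lia)) as [_ [_ [c3 c4]]].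
    destruct Hi as [-> | ->].
    + apply (pol3_unique _ _ _ _ _ (ncol_rot _ _ _ (ncol_rot _ _ _ c4))); auto; apply Hrow; lia.
    + apply (pol3_unique _ _ _ _ _ c3); auto; apply Hrow; lia.
Qed.

Lemma dn_pole_dir_neq0 k l i M e : (k < m)%nat -> (l < n)%nat -> (i = k \/ i = S k) -> M <> vzero ->
  (forall j, (j <= n)%nat -> dot M (F i j) = e) -> pole_dir M e (D k l) <> vzero.
Proof.
  intros Hk Hl Hi HM Hrow E. apply (dn_row_not_on_face k l i Hk Hl Hi).
  intros j Hj. apply (pole_dir_eq0 M e); auto.
Qed.

Section RowHomothety.

Variables (k : nat) (M : vec3) (e : R).
Hypothesis Hk : (S k < m)%nat.
Hypothesis HM : M <> vzero.
Hypothesis Hrow : forall j, (j <= n)%nat -> dot M (F (S k) j) = e.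
Hypothesis Hcol : forall j, (j <= n)%nat -> exists u, u <> vzero /\ forall i, (i <= m)%nat -> dpol (F i j) u = 0.

Let R l := pole_dir M e (D k l).
Let w l := vsub (D (S k) l) (D k l).

Lemma hom_w_parallel l : (l < n)%nat -> exists rho, w l = vscale rho (R l).
Proof.
  intros Hl. destruct (dn_face _ _ _ _ HD k l ltac:(lia) Hl) as [_ [h2 [h3 _]]].
  destruct (dn_face _ _ _ _ HD (S k) l Hk Hl) as [g1 [_ [_ g4]]].
  destruct (dn_ncol (S k) l Hk Hl) as [c1 _].
  apply (dpol2_parallel (F (S k) l) (F (S k) (S l))).
  - exact (top_neq_of_ncol _ _ _ (ncol_swap _ _ _ c1)).
  - apply dpol_of_pol; auto.
  - apply dpol_of_pol; auto.
  - apply dpol_pole_dir; auto; apply Hrow; lia.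
  - apply dpol_pole_dir; auto; apply Hrow; lia.
  - apply (dn_pole_dir_neq0 k l (S k)); auto; lia.
Qed.

(** The dual edges of rows [k] and [S k] at column [S l] are dual to column edges,
    hence parallel in the top view to the column direction [u]; [R l] is dual to a row edge. *)
Lemma hom_column_dets l u : (S l < n)%nat -> u <> vzero -> (forall i, (i <= m)%nat -> dpol (F i (S l)) u = 0) ->
  det3 e3 (vsub (D k (S l)) (D k l)) u = 0 /\ det3 e3 (vsub (D (S k) (S l)) (D (S k) l)) u = 0 /\
  det3 e3 (R l) u <> 0.
Proof.
  intros Hl Hu Hul.
  destruct (dn_face _ _ _ _ HD k l ltac:(lia) ltac:(lia)) as [h1 [h2 [h3 h4]]].
  destruct (dn_face _ _ _ _ HD k (S l) ltac:(lia) Hl) as [g1 [g2 [g3 g4]]].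
  destruct (dn_face _ _ _ _ HD (S k) l Hk ltac:(lia)) as [f1 [f2 [f3 f4]]].
  destruct (dn_face _ _ _ _ HD (S k) (S l) Hk Hl) as [q1 [q2 [q3 q4]]].
  destruct (dn_ncol k l ltac:(lia) ltac:(lia)) as [_ [_ [cC cD]]].
  destruct (dn_ncol (S k) l Hk ltac:(lia)) as [_ [_ [cC' _]]].
  split; [|split].
  - apply (dpol2_det0 (F k (S l)) (F (S k) (S l))); try (apply Hul; lia); try (apply dpol_of_pol; auto).
    exact (top_neq_of_ncol _ _ _ (ncol_swap _ _ _ cD)).
  - apply (dpol2_det0 (F (S k) (S l)) (F (S (S k)) (S l))); try (apply Hul; lia); try (apply dpol_of_pol; auto).
    exact (not_eq_sym (top_neq_of_ncol _ _ _ cC')).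
  - apply (dpol_det_neq0 (F (S k) (S l)) (F (S k) l) (F k (S l))); auto; try (apply Hul; lia).
    + exact (ncol_swap _ _ _ cC).
    + apply dpol_pole_dir; auto; apply Hrow; lia.
    + apply dpol_pole_dir; auto; apply Hrow; lia.
    + apply (dn_pole_dir_neq0 k l (S k)); auto; lia.
Qed.

Lemma hom_step l rho rho' : (S l < n)%nat -> w l = vscale rho (R l) -> w (S l) = vscale rho' (R (S l)) ->
  rho' = rho /\ vsub (D (S k) (S l)) (D (S k) l) = vscale (1 + rho * vz M) (vsub (D k (S l)) (D k l)).
Proof.
  intros Hl Hw Hw'. destruct (Hcol (S l) ltac:(lia)) as [u [Hu Hul]].
  destruct (hom_column_dets l u Hl Hu Hul) as [Hd [Hd' HR]].
  set (d := vsub (D k (S l)) (D k l)) in *. set (d' := vsub (D (S k) (S l)) (D (S k) l)) in *.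
  assert (ER : R (S l) = vadd (R l) (vscale (vz M) d)).
  { pose proof (pole_dir_sub M e (D k (S l)) (D k l)) as E. fold (R l) (R (S l)) d in E.
    apply vec3_eq; [apply (f_equal vx) in E | apply (f_equal vy) in E | apply (f_equal vz) in E];
      vsimpl in *; lra. }
  assert (E : vscale (rho' - rho) (R l) = vsub d' (vscale (1 + rho' * vz M) d)).
  { unfold w in Hw, Hw'. rewrite ER in Hw'. unfold d, d'.
    apply vec3_eq; [apply (f_equal vx) in Hw, Hw' | apply (f_equal vy) in Hw, Hw' | apply (f_equal vz) in Hw, Hw'];
      vsimpl in *; lra. }
  assert (Hrho : rho' = rho).
  { apply (f_equal (fun X => det3 e3 X u)) in E. cbv beta in E.
    replace (det3 e3 (vsub d' (vscale (1 + rho' * vz M) d)) u) with (det3 e3 d' u - (1 + rho' * vz M) * det3 e3 d u)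
      in E by (vsimpl; ring).
    rewrite det3_e3_scale_l, Hd, Hd', Rmult_0_r, Rminus_0_r in E.
    apply Rmult_integral in E as [E|E]; [lra | contradiction]. }
  split; [exact Hrho|]. subst rho'.
  apply vec3_eq; [apply (f_equal vx) in E | apply (f_equal vy) in E | apply (f_equal vz) in E];
    vsimpl in *; nra.
Qed.

(** The dual polyline of row [S k] is the image of that of row [k] under a
    homothety centred at the dual point of the plane of row [S k] of the net. *)
Lemma dn_row_homothety : exists r, 0 < r /\ forall l, (S l < n)%nat ->
  vsub (D (S k) (S l)) (D (S k) l) = vscale r (vsub (D k (S l)) (D k l)).
Proof.
  pose proof (dn_n _ _ _ _ HD) as Hn.
  destruct (hom_w_parallel 0 ltac:(lia)) as [rho Hrho].
  assert (Hall : forall l, (l < n)%nat -> w l = vscale rho (R l)).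
  { induction l as [|l IH]; intros Hl; auto.
    destruct (hom_w_parallel (S l) Hl) as [rho' Hrho'].
    destruct (hom_step l rho rho' Hl (IH ltac:(lia)) Hrho') as [-> _]. exact Hrho'. }
  exists (1 + rho * vz M). split.
  - pose proof (dn_sign_j _ _ _ _ HD k 0 (vsub (D k 1%nat) (D k 0%nat)) 1 (1 + rho * vz M)) as Hs.
    rewrite Rmult_1_l in Hs. apply Hs; try lia.
    + apply vec3_eq; vsimpl; ring.
    + apply (hom_step 0 rho rho); auto; lia.
  - intros l Hl. apply (hom_step l rho rho); auto. apply Hall; lia.
Qed.

End RowHomothety.

Hypothesis Hrows : forall i, (i <= m)%nat -> exists M e, M <> vzero /\ forall j, (j <= n)%nat -> dot M (F i j) = e.
Hypothesis Hcols : forall j, (j <= n)%nat -> exists u, u <> vzero /\ forall i, (i <= m)%nat -> dpol (F i j) u = 0.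

Lemma dn_rows_scaled k : (k < m)%nat -> 0 < row_scale D k /\ forall l, (S l < n)%nat ->
  vsub (D k (S l)) (D k l) = vscale (row_scale D k) (vsub (D 0%nat (S l)) (D 0%nat l)).
Proof.
  intros Hk. pose proof (dn_n _ _ _ _ HD) as Hn.
  assert (Hex : exists r, 0 < r /\ forall l, (S l < n)%nat ->
            vsub (D k (S l)) (D k l) = vscale r (vsub (D 0%nat (S l)) (D 0%nat l))).
  { induction k as [|k IH].
    - exists 1. split; [lra|]. intros l Hl. apply vec3_eq; vsimpl; ring.
    - destruct (IH ltac:(lia)) as [r [Hr Hrl]].
      destruct (Hrows (S k) ltac:(lia)) as [M [e [HM HMrow]]].
      destruct (dn_row_homothety k M e Hk HM HMrow Hcols) as [r' [Hr' Hr'l]].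
      exists (r' * r). split; [nra|]. intros l Hl. rewrite Hr'l, Hrl by exact Hl.
      apply vec3_eq; vsimpl; ring. }
  destruct Hex as [r [Hr Hrl]].
  assert (Hd : vsub (D 0%nat 1%nat) (D 0%nat 0%nat) <> vzero)
    by (apply vsub_neq0; intro E; apply (dn_adj_j _ _ _ _ HD 0 0); auto; lia).
  assert (Er : row_scale D k = r).
  { unfold row_scale. rewrite (Hrl 0%nat) by lia. rewrite dot_vscale.
    field. pose proof (dot_self_pos _ Hd). lra. }
  rewrite Er. auto.
Qed.

Lemma dn_row_affine k l : (k < m)%nat -> (l < n)%nat ->
  D k l = vadd (D k 0%nat) (vscale (row_scale D k) (vsub (D 0%nat l) (D 0%nat 0%nat))).
Proof.
  intros Hk. destruct (dn_rows_scaled k Hk) as [_ Hs].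
  induction l as [|l IH]; intros Hl.
  - apply vec3_eq; vsimpl; ring.
  - pose proof (Hs l Hl) as E. rewrite IH in E by lia.
    apply vec3_eq; [apply (f_equal vx) in E | apply (f_equal vy) in E | apply (f_equal vz) in E];
      vsimpl in *; lra.
Qed.

Lemma dn_face_incident k l i j : (k < m)%nat -> (l < n)%nat -> (k <= i <= S k)%nat -> (l <= j <= S l)%nat ->
  pol (F i j) (D k l) = 0.
Proof.
  intros Hk Hl Hi Hj. destruct (dn_face _ _ _ _ HD k l Hk Hl) as [h1 [h2 [h3 h4]]].
  destruct (Nat.eq_dec i k) as [->|Ei]; destruct (Nat.eq_dec j l) as [->|Ej]; auto.
  - replace j with (S l) by lia. exact h4.
  - replace i with (S k) by lia. exact h2.
  - replace i with (S k) by lia. replace j with (S l) by lia. exact h3.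
Qed.

Lemma dn_vertex_ncol i j j' : (i <= m)%nat -> (j <= n)%nat -> (j' <= n)%nat -> (j' = S j \/ j = S j') ->
  exists i', (i' <= m)%nat /\ ncol (F i j) (F i' j) (F i j').
Proof.
  intros Hi Hj Hj' Hjj. pose proof (dn_m _ _ _ _ HD).
  destruct (Compare_dec.lt_dec i m) as [Him|Him]; [exists (S i) | exists (i - 1)%nat];
    (split; [lia|]); destruct Hjj as [-> | ->].
  - exact (proj1 (dn_ncol i j Him ltac:(lia))).
  - destruct (dn_ncol i j' Him ltac:(lia)) as [_ [_ [_ c]]]. exact (ncol_swap _ _ _ c).
  - replace i with (S (i - 1)) at 1 3 by lia.
    destruct (dn_ncol (i - 1) j ltac:(lia) ltac:(lia)) as [_ [c _]]. exact (ncol_swap _ _ _ c).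
  - replace i with (S (i - 1)) at 1 3 by lia.
    destruct (dn_ncol (i - 1) j' ltac:(lia) ltac:(lia)) as [_ [_ [c _]]]. exact c.
Qed.

Section Extension.

Variables (M0 M1 u0 un : vec3) (e0 e1 : R).
Hypothesis HM0 : M0 <> vzero.
Hypothesis HR0 : forall j, (j <= n)%nat -> dot M0 (F 0%nat j) = e0.
Hypothesis HM1 : M1 <> vzero.
Hypothesis HR1 : forall j, (j <= n)%nat -> dot M1 (F m j) = e1.
Hypothesis Hu0 : u0 <> vzero.
Hypothesis HU0 : forall i, (i <= m)%nat -> dpol (F i 0%nat) u0 = 0.
Hypothesis Hun : un <> vzero.
Hypothesis HUn : forall i, (i <= m)%nat -> dpol (F i n) un = 0.

Let k0 := shrink (vz M0).
Let k1 := shrink (vz M1).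

(** [ext_P i j = ext_a i + ext_sigma i * ext_b j] extends the dual net by one
    row and one column on each side ([ext_P (S k) (S l) = D k l]): virtual faces
    beyond the boundary, chosen so that every vertex [F i j] is incident with the
    four points [ext_P i' j'], [i' = i, S i], [j' = j, S j] ([ext_P_incident]). *)
Definition ext_sigma (i : nat) : R :=
  match i with
  | O => 1 + k0 * vz M0
  | S k => if (k <? m)%nat then row_scale D k else (1 + k1 * vz M1) * row_scale D (m - 1)
  end.

Definition ext_a (i : nat) : vec3 :=
  match i with
  | O => vscale k0 (mk3 (vx M0) (vy M0) e0)
  | S k => if (k <? m)%nat then vsub (D k 0%nat) (vscale (row_scale D k) (D 0%nat 0%nat))
           else vadd (vscale (1 + k1 * vz M1)
                        (vsub (D (m - 1)%nat 0%nat) (vscale (row_scale D (m - 1)) (D 0%nat 0%nat))))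
                     (vscale k1 (mk3 (vx M1) (vy M1) e1))
  end.

Definition ext_b (j : nat) : vec3 :=
  match j with
  | O => vsub (D 0%nat 0%nat) u0
  | S l => if (l <? n)%nat then D 0%nat l else vadd (D 0%nat (n - 1)%nat) un
  end.

Definition ext_P (i j : nat) : vec3 := vadd (ext_a i) (vscale (ext_sigma i) (ext_b j)).

Lemma ext_P_inner k l : (k < m)%nat -> (l < n)%nat -> ext_P (S k) (S l) = D k l.
Proof.
  intros Hk Hl. unfold ext_P, ext_a, ext_b, ext_sigma.
  rewrite (proj2 (Nat.ltb_lt k m) Hk), (proj2 (Nat.ltb_lt l n) Hl), (dn_row_affine k l Hk Hl).
  apply vec3_eq; vsimpl; ring.
Qed.

Lemma ext_P_col0 i : ext_P i 0%nat = vadd (ext_P i 1%nat) (vscale (- ext_sigma i) u0).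
Proof.
  pose proof (dn_n _ _ _ _ HD). unfold ext_P, ext_b. rewrite (proj2 (Nat.ltb_lt 0 n)) by lia.
  apply vec3_eq; vsimpl; ring.
Qed.

Lemma ext_P_coln i : ext_P i (S n) = vadd (ext_P i n) (vscale (ext_sigma i) un).
Proof.
  pose proof (dn_n _ _ _ _ HD).
  assert (Hb : ext_b n = D 0%nat (n - 1)%nat).
  { replace n with (S (n - 1)) at 1 by lia. simpl. rewrite (proj2 (Nat.ltb_lt (n - 1) n)) by lia. reflexivity. }
  unfold ext_P. rewrite Hb. simpl. rewrite Nat.ltb_irrefl. apply vec3_eq; vsimpl; ring.
Qed.

Lemma ext_P_row0 j : ext_P 0%nat j = vadd (ext_P 1%nat j) (vscale k0 (pole_dir M0 e0 (ext_P 1%nat j))).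
Proof.
  pose proof (dn_m _ _ _ _ HD). unfold ext_P, ext_a, ext_sigma, pole_dir.
  rewrite (proj2 (Nat.ltb_lt 0 m)) by lia.
  replace (row_scale D 0) with 1.
  - apply vec3_eq; vsimpl; ring.
  - unfold row_scale. field. apply Rgt_not_eq, dot_self_pos, vsub_neq0.
    intro E. apply (dn_adj_j _ _ _ _ HD 0 0); auto; pose proof (dn_n _ _ _ _ HD); lia.
Qed.

Lemma ext_P_rowm j : ext_P (S m) j = vadd (ext_P m j) (vscale k1 (pole_dir M1 e1 (ext_P m j))).
Proof.
  pose proof (dn_m _ _ _ _ HD).
  assert (Hs : ext_sigma m = row_scale D (m - 1)).
  { replace m with (S (m - 1)) at 1 by lia. simpl. rewrite (proj2 (Nat.ltb_lt (m - 1) m)) by lia. reflexivity. }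
  assert (Ha : ext_a m = vsub (D (m - 1)%nat 0%nat) (vscale (row_scale D (m - 1)) (D 0%nat 0%nat))).
  { replace m with (S (m - 1)) at 1 by lia. simpl. rewrite (proj2 (Nat.ltb_lt (m - 1) m)) by lia. reflexivity. }
  unfold ext_P, pole_dir. rewrite Hs, Ha. simpl. rewrite Nat.ltb_irrefl. apply vec3_eq; vsimpl; ring.
Qed.

Lemma ext_sigma_pos k : (k <= S m)%nat -> 0 < ext_sigma k.
Proof.
  intros Hk. pose proof (dn_m _ _ _ _ HD).
  destruct k as [|k]; simpl; [apply shrink_pos|].
  destruct (k <? m)%nat eqn:E.
  - apply Nat.ltb_lt in E. apply (dn_rows_scaled k E).
  - apply Rmult_lt_0_compat; [apply shrink_pos | apply dn_rows_scaled; lia].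
Qed.

Lemma ext_P_incident_inner k i j j' : (k < m)%nat -> (k <= i <= S k)%nat -> (j <= n)%nat -> (j <= j' <= S j)%nat ->
  pol (F i j) (ext_P (S k) j') = 0.
Proof.
  intros Hk Hi Hj Hj'. pose proof (dn_n _ _ _ _ HD).
  destruct j' as [|l].
  - replace j with 0%nat by lia. rewrite ext_P_col0, ext_P_inner by lia.
    apply pol_add_dir; [apply dn_face_incident; lia | rewrite dpol_scale, HU0 by lia; ring].
  - destruct (Nat.eq_dec l n) as [->|Hl].
    + replace j with n by lia. rewrite ext_P_coln.
      replace n with (S (n - 1)) at 2 by lia. rewrite ext_P_inner by lia.
      apply pol_add_dir; [apply dn_face_incident; lia | rewrite dpol_scale, HUn by lia; ring].
    + rewrite ext_P_inner by lia. apply dn_face_incident; lia.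
Qed.

Lemma ext_P_incident i j i' j' : (i <= m)%nat -> (j <= n)%nat -> (i <= i' <= S i)%nat -> (j <= j' <= S j)%nat ->
  pol (F i j) (ext_P i' j') = 0.
Proof.
  intros Hi Hj Hi' Hj'. pose proof (dn_m _ _ _ _ HD).
  destruct i' as [|k].
  - replace i with 0%nat by lia. rewrite ext_P_row0.
    apply pol_add_dir; [apply ext_P_incident_inner; lia|].
    rewrite dpol_scale, dpol_pole_dir; [ring | apply HR0; lia | apply ext_P_incident_inner; lia].
  - destruct (Nat.eq_dec k m) as [->|Hk].
    + replace i with m by lia. rewrite ext_P_rowm.
      assert (Hin : pol (F m j) (ext_P m j') = 0).
      { replace (ext_P m j') with (ext_P (S (m - 1)) j') by (f_equal; lia).
        apply ext_P_incident_inner; lia. }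
      apply pol_add_dir; [exact Hin|].
      rewrite dpol_scale, dpol_pole_dir; [ring | apply HR1; lia | exact Hin].
    + apply ext_P_incident_inner; lia.
Qed.

Lemma ext_db_neq0 j : (j <= n)%nat -> vsub (ext_b (S j)) (ext_b j) <> vzero.
Proof.
  intros Hj. pose proof (dn_n _ _ _ _ HD). destruct j as [|l].
  - unfold ext_b. rewrite (proj2 (Nat.ltb_lt 0 n)) by lia.
    intro E. apply Hu0. rewrite <- E. apply vec3_eq; vsimpl; ring.
  - destruct (Nat.eq_dec (S l) n) as [El|El].
    + unfold ext_b. rewrite El, Nat.ltb_irrefl, (proj2 (Nat.ltb_lt l n)) by lia.
      replace (n - 1)%nat with l by lia. intro E. apply Hun. rewrite <- E. apply vec3_eq; vsimpl; ring.
    + unfold ext_b. rewrite (proj2 (Nat.ltb_lt l n)), (proj2 (Nat.ltb_lt (S l) n)) by lia.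
      pose proof (dn_m _ _ _ _ HD). apply vsub_neq0. intro E. apply (dn_adj_j _ _ _ _ HD 0 l); [lia | lia | symmetry; exact E].
Qed.

Lemma ext_db_dpol i j : (i <= m)%nat -> (j <= n)%nat -> dpol (F i j) (vsub (ext_b (S j)) (ext_b j)) = 0.
Proof.
  intros Hi Hj. pose proof (ext_sigma_pos i ltac:(lia)) as Hs.
  pose proof (dpol_of_pol _ _ _ (ext_P_incident i j i j Hi Hj ltac:(lia) ltac:(lia))
                                (ext_P_incident i j i (S j) Hi Hj ltac:(lia) ltac:(lia))) as E.
  replace (vsub (ext_P i (S j)) (ext_P i j)) with (vscale (ext_sigma i) (vsub (ext_b (S j)) (ext_b j)))
    in E by (unfold ext_P; apply vec3_eq; vsimpl; ring).
  rewrite dpol_scale in E. apply Rmult_integral in E as [E|E]; [lra | exact E].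
Qed.

Lemma ext_Delta_neq0 i l : (i <= m)%nat -> (l < n)%nat -> Delta ext_a ext_b ext_sigma i (S l) <> vzero.
Proof.
  intros Hi Hl. pose proof (dn_m _ _ _ _ HD). rewrite Delta_ext. fold (ext_P (S i) (S l)) (ext_P i (S l)).
  destruct i as [|i].
  - rewrite (ext_P_row0 (S l)), ext_P_inner by lia. intro E.
    apply (dn_pole_dir_neq0 0 l 0 M0 e0); auto; try lia.
    destruct (shrink_pos (vz M0)) as [Hk _]. fold k0 in Hk.
    apply vec3_eq; [apply (f_equal vx) in E | apply (f_equal vy) in E | apply (f_equal vz) in E];
      vsimpl in *; apply (Rmult_eq_reg_l k0); lra.
  - destruct (Nat.eq_dec i m) as [->|Him]; [lia|].
    destruct (Nat.eq_dec (S i) m) as [Em|Em].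
    + assert (Hlast : ext_P (S (S i)) (S l) = vadd (ext_P (S i) (S l)) (vscale k1 (pole_dir M1 e1 (ext_P (S i) (S l)))))
        by (rewrite Em; apply ext_P_rowm).
      rewrite Hlast, ext_P_inner by lia. intro E.
      apply (dn_pole_dir_neq0 i l m M1 e1); auto; try lia.
      destruct (shrink_pos (vz M1)) as [Hk _]. fold k1 in Hk.
      apply vec3_eq; [apply (f_equal vx) in E | apply (f_equal vy) in E | apply (f_equal vz) in E];
        vsimpl in *; apply (Rmult_eq_reg_l k1); lra.
    + rewrite !ext_P_inner by lia. apply vsub_neq0. intro E. apply (dn_adj_i _ _ _ _ HD i l); auto; lia.
Qed.

Lemma ext_det_neq0 i j : (i <= m)%nat -> (j <= n)%nat ->
  det3 e3 (vsub (ext_b (S j)) (ext_b j)) (Delta ext_a ext_b ext_sigma i j) <> 0.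
Proof.
  intros Hi Hj. pose proof (dn_n _ _ _ _ HD).
  (* [Delta i (S j)] (if [j < n]) or [Delta i j] (if [j = n]) is dual to a row edge *)
  destruct (Compare_dec.lt_dec j n) as [Hjn|Hjn].
  - rewrite <- det_Delta_succ. destruct (dn_vertex_ncol i j (S j) Hi Hj Hjn ltac:(lia)) as [i' [Hi' Hc]].
    apply (dpol_det_neq0 _ _ _ _ _ Hc); try apply ext_db_dpol; auto; try lia.
    + rewrite Delta_ext. apply dpol_of_pol; apply ext_P_incident; lia.
    + rewrite Delta_ext. apply dpol_of_pol; apply ext_P_incident; lia.
    + apply ext_db_neq0; lia.
    + apply ext_Delta_neq0; lia.
  - replace j with n in * by lia. destruct (dn_vertex_ncol i n (n - 1) Hi Hj ltac:(lia) ltac:(lia)) as [i' [Hi' Hc]].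
    apply (dpol_det_neq0 _ _ _ _ _ Hc); try apply ext_db_dpol; auto; try lia.
    + rewrite Delta_ext. apply dpol_of_pol; apply ext_P_incident; lia.
    + rewrite Delta_ext. apply dpol_of_pol; apply ext_P_incident; lia.
    + apply ext_db_neq0; lia.
    + pose proof (ext_Delta_neq0 i (n - 1) Hi ltac:(lia)) as Hd.
      replace (S (n - 1)) with n in Hd by lia. exact Hd.
Qed.

Lemma ext_represents i j : (i <= m)%nat -> (j <= n)%nat ->
  F i j = T_point ext_a ext_b ext_sigma i j (vadd (ext_a i) (vscale (ext_sigma i) (ext_b j))).
Proof.
  intros Hi Hj. rewrite T_point_plane_dual. apply plane_dual_unique.
  - apply ext_det_neq0; auto.
  - apply (ext_P_incident i j i j); lia.
  - apply ext_db_dpol; auto.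
  - rewrite Delta_ext. apply dpol_of_pol; apply ext_P_incident; lia.
Qed.

End Extension.

Lemma dn_T_point_representation : exists (a b : nat -> vec3) (sigma : nat -> R),
  (forall k, (k <= S m)%nat -> 0 < sigma k) /\
  (forall i j, (i <= m)%nat -> (j <= n)%nat ->
     det3 e3 (vsub (b (S j)) (b j)) (Delta a b sigma i j) <> 0 /\
     F i j = T_point a b sigma i j (vadd (a i) (vscale (sigma i) (b j)))).
Proof.
  destruct (Hrows 0 ltac:(lia)) as [M0 [e0 [HM0 HR0]]].
  destruct (Hrows m ltac:(lia)) as [M1 [e1 [HM1 HR1]]].
  destruct (Hcols 0 ltac:(lia)) as [u0 [Hu0 HU0]].
  destruct (Hcols n ltac:(lia)) as [un [Hun HUn]].
  exists (ext_a M0 M1 e0 e1), (ext_b u0 un), (ext_sigma M0 M1). split.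
  - apply ext_sigma_pos.
  - intros i j Hi Hj. split; [apply ext_det_neq0 | apply ext_represents]; auto.
Qed.

End DualNet.

(** * Dual convexity gives a dual net *)

Lemma cross_cross_perp u v w : dot u w = 0 -> dot v w = 0 -> cross (cross u v) w = vzero.
Proof.
  intros h1 h2.
  assert (E : cross (cross u v) w = vsub (vscale (dot u w) v) (vscale (dot v w) u)) by (apply vec3_eq; vsimpl; ring).
  rewrite E, h1, h2. apply vec3_eq; vsimpl; ring.
Qed.

Lemma dot_pos_parallel a b t : 0 < dot t t -> cross a t = vzero -> cross b t = vzero ->
  0 < dot a t -> 0 < dot b t -> 0 < dot a b.
Proof.
  intros Ht ha hb pa pb.
  (* Lagrange's identity *)
  assert (L : dot t t * dot a b = dot a t * dot b t + dot (cross a t) (cross b t)) by (vsimpl; ring).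
  rewrite ha, hb in L. replace (dot vzero vzero) with 0 in L by (vsimpl; ring).
  assert (0 < dot t t * dot a b) by (rewrite L; nra). nra.
Qed.

Lemma convex_quad_turns A B C D : convex_quad A B C D ->
  let t1 := cross (vsub B A) (vsub C B) in let t2 := cross (vsub C B) (vsub D C) in
  let t3 := cross (vsub D C) (vsub A D) in let t4 := cross (vsub A D) (vsub B A) in
  0 < dot t1 t1 /\ 0 < dot t2 t2 /\ 0 < dot t3 t3 /\ 0 < dot t4 t4 /\
  0 < dot t1 t2 /\ 0 < dot t1 t3 /\ 0 < dot t1 t4 /\ 0 < dot t2 t3 /\ 0 < dot t2 t4 /\ 0 < dot t3 t4 /\
  0 < dot t2 t1 /\ 0 < dot t3 t1 /\ 0 < dot t4 t1 /\ 0 < dot t3 t2 /\ 0 < dot t4 t2 /\ 0 < dot t4 t3.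
Proof.
  intros [Hd [H1 [H2 [H3 H4]]]] t1 t2 t3 t4. cbv zeta in *. fold t1 t2 t3 t4 in H1, H2, H3, H4.
  (* all turns are normal to the plane of the quadrilateral, hence parallel to [t1] *)
  assert (pAB : dot (vsub B A) t1 = 0) by (unfold t1; vsimpl; ring).
  assert (pBC : dot (vsub C B) t1 = 0) by (unfold t1; vsimpl; ring).
  assert (pCD : dot (vsub D C) t1 = 0) by (unfold t1; rewrite <- Hd; vsimpl; ring).
  assert (pDA : dot (vsub A D) t1 = 0) by (unfold t1; replace 0 with (- 0) by ring; rewrite <- Hd; vsimpl; ring).
  assert (c2 : cross t2 t1 = vzero) by (apply cross_cross_perp; auto).
  assert (c3 : cross t3 t1 = vzero) by (apply cross_cross_perp; auto).
  assert (c4 : cross t4 t1 = vzero) by (apply cross_cross_perp; auto).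
  assert (c1 : cross t1 t1 = vzero) by (apply vec3_eq; vsimpl; ring).
  assert (S : forall x y, dot x y = dot y x) by (intros; vsimpl; ring).
  rewrite (S t1) in H2, H3, H4.
  repeat split; try rewrite (S t1); try apply (dot_pos_parallel _ _ t1); auto.
Qed.

Lemma convex_quad_rot A B C D : convex_quad A B C D -> convex_quad B C D A.
Proof.
  intros Hc. pose proof (convex_quad_turns A B C D Hc) as T. cbv zeta in T. destruct Hc as [Hd _].
  split; [|cbv zeta; tauto].
  transitivity (- det3 (vsub B A) (vsub C A) (vsub D A)); [vsimpl; ring | rewrite Hd; ring].
Qed.

Lemma convex_quad_rev A B C D : convex_quad A B C D -> convex_quad A D C B.
Proof.
  intros Hc. pose proof (convex_quad_turns A B C D Hc) as T. cbv zeta in T. destruct Hc as [Hd _].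
  split.
  - transitivity (- det3 (vsub B A) (vsub C A) (vsub D A)); [vsimpl; ring | rewrite Hd; ring].
  - cbv zeta.
    replace (cross (vsub D A) (vsub C D)) with (vscale (-1) (cross (vsub D C) (vsub A D))) by (apply vec3_eq; vsimpl; ring).
    replace (cross (vsub C D) (vsub B C)) with (vscale (-1) (cross (vsub C B) (vsub D C))) by (apply vec3_eq; vsimpl; ring).
    replace (cross (vsub B C) (vsub A B)) with (vscale (-1) (cross (vsub B A) (vsub C B))) by (apply vec3_eq; vsimpl; ring).
    replace (cross (vsub A B) (vsub D A)) with (vscale (-1) (cross (vsub A D) (vsub B A))) by (apply vec3_eq; vsimpl; ring).
    rewrite !dot_vscale, !dot_vscale_r.
    assert (N : forall x, -1 * (-1 * x) = x) by (intro; ring). rewrite !N. tauto.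
Qed.

Definition off_plane (O Q1 Q2 Q3 Q4 : vec3) : Prop := forall N, N <> vzero ->
  dot N (vsub Q1 O) = 0 -> dot N (vsub Q2 O) = 0 -> dot N (vsub Q3 O) = 0 -> dot N (vsub Q4 O) = 0 -> False.

Lemma off_plane_of_det O Q1 Q2 Q3 Q4 : det3 (vsub Q2 Q1) (vsub Q4 Q1) (vsub O Q1) <> 0 -> off_plane O Q1 Q2 Q3 Q4.
Proof.
  intros Hd N HN h1 h2 h3 h4. apply HN.
  assert (nx : dot N (vsub Q2 Q1) = 0) by (transitivity (dot N (vsub Q2 O) - dot N (vsub Q1 O)); [vsimpl; ring | lra]).
  assert (ny : dot N (vsub Q4 Q1) = 0) by (transitivity (dot N (vsub Q4 O) - dot N (vsub Q1 O)); [vsimpl; ring | lra]).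
  assert (nz : dot N (vsub O Q1) = 0) by (transitivity (- dot N (vsub Q1 O)); [vsimpl; ring | lra]).
  set (x := vsub Q2 Q1) in *. set (y := vsub Q4 Q1) in *. set (z := vsub O Q1) in *.
  clearbody x y z.
  assert (I : vscale (det3 x y z) N =
              vadd (vadd (vscale (dot N x) (cross y z)) (vscale (dot N y) (cross z x))) (vscale (dot N z) (cross x y)))
    by (apply vec3_eq; vsimpl; ring).
  rewrite nx, ny, nz in I.
  apply vec3_eq; apply (Rmult_eq_reg_l (det3 x y z)); auto;
    [apply (f_equal vx) in I | apply (f_equal vy) in I | apply (f_equal vz) in I]; vsimpl in *; lra.
Qed.

Lemma off_plane_rot O Q1 Q2 Q3 Q4 : off_plane O Q1 Q2 Q3 Q4 -> off_plane O Q2 Q3 Q4 Q1.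
Proof. intros H N HN h2 h3 h4 h1. exact (H N HN h1 h2 h3 h4). Qed.

Definition wsum4 (w1 : R) (Q1 : vec3) (w2 : R) (Q2 : vec3) (w3 : R) (Q3 : vec3) (w4 : R) (Q4 : vec3) : vec3 :=
  vadd (vadd (vscale w1 Q1) (vscale w2 Q2)) (vadd (vscale w3 Q3) (vscale w4 Q4)).

Lemma wsum4_rot w1 Q1 w2 Q2 w3 Q3 w4 Q4 : wsum4 w2 Q2 w3 Q3 w4 Q4 w1 Q1 = wsum4 w1 Q1 w2 Q2 w3 Q3 w4 Q4.
Proof. unfold wsum4; apply vec3_eq; vsimpl; ring. Qed.

Lemma quad_edge_plane_identity A B C Dq n O : det3 (vsub B A) (vsub C A) (vsub Dq A) = 0 ->
  dot n (vsub A O) = 0 -> dot n (vsub B O) = 0 ->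
  let t1 := cross (vsub B A) (vsub C B) in let t4 := cross (vsub A Dq) (vsub B A) in
  dot t1 t1 * dot n (vsub Dq O) = dot n (vsub C O) * dot t1 t4.
Proof.
  intros Hdet hA hB t1 t4.
  assert (I : dot t1 t1 * dot n (vsub Dq A) =
     det3 (vsub B A) (vsub C A) (vsub Dq A) * dot n t1 + dot n (vsub C A) * dot t1 t4
     - dot n (vsub B A) * dot (vsub C A) (cross (vsub Dq A) t1)) by (unfold t1, t4; vsimpl; ring).
  replace (dot n (vsub Dq A)) with (dot n (vsub Dq O) - dot n (vsub A O)) in I by (vsimpl; ring).
  replace (dot n (vsub C A)) with (dot n (vsub C O) - dot n (vsub A O)) in I by (vsimpl; ring).
  replace (dot n (vsub B A)) with (dot n (vsub B O) - dot n (vsub A O)) in I by (vsimpl; ring).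
  rewrite hA, hB, Hdet in I. lra.
Qed.

(** The plane through the vertex O and the edge AB of a convex 4-hedral angle
    whose interior contains the vertical ray [O + hh e3]: the ray direction
    and the opposite edges C, Dq lie on the same (strict) side of it. *)
Lemma hedral_face_side O A B C Dq n wa wb wc wd hh :
  convex_quad A B C Dq -> off_plane O A B C Dq -> n <> vzero ->
  dot n (vsub A O) = 0 -> dot n (vsub B O) = 0 ->
  0 < wa -> 0 < wb -> 0 < wc -> 0 < wd -> wa + wb + wc + wd = 1 ->
  vsub (wsum4 wa A wb B wc C wd Dq) O = vscale hh e3 ->
  vz n <> 0 /\ 0 < dot n (vsub C O) * vz n * hh /\ 0 < dot n (vsub Dq O) * vz n * hh.
Proof.
  intros Hc Hoff Hn hA hB Ha Hb Hc' Hd Hw Hray.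
  pose proof (convex_quad_turns A B C Dq Hc) as T. cbv zeta in T.
  destruct Hc as [Hdet _].
  set (t1 := cross (vsub B A) (vsub C B)) in *. set (t4 := cross (vsub A Dq) (vsub B A)) in *.
  destruct T as [T1 [_ [_ [_ [_ [_ [T14 _]]]]]]].
  set (sC := dot n (vsub C O)). set (sD := dot n (vsub Dq O)).
  assert (Hsides : dot t1 t1 * sD = sC * dot t1 t4) by (apply (quad_edge_plane_identity A B C Dq n O); auto).
  assert (Hray' : wc * sC + wd * sD = vz n * hh).
  { apply (f_equal (dot n)) in Hray.
    replace (dot n (vsub (wsum4 wa A wb B wc C wd Dq) O))
      with (wa * dot n (vsub A O) + wb * dot n (vsub B O) + wc * sC + wd * sD + (wa + wb + wc + wd - 1) * dot n O)
      in Hray by (unfold sC, sD, wsum4; vsimpl; ring).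
    rewrite hA, hB, Hw in Hray.
    replace (vz n * hh) with (dot n (vscale hh e3)) by (vsimpl; ring). rewrite <- Hray. ring. }
  assert (HsC : sC <> 0).
  { intro E. rewrite E in Hsides. apply (Hoff n Hn); auto. unfold sD in Hsides. nra. }
  set (K := wc * dot t1 t1 + wd * dot t1 t4).
  assert (HK : 0 < K) by (unfold K; nra).
  assert (E : vz n * hh * dot t1 t1 = sC * K).
  { rewrite <- Hray'. unfold K. transitivity (wc * sC * dot t1 t1 + wd * (dot t1 t1 * sD)); [ring|].
    rewrite Hsides. ring. }
  assert (HzC : 0 < sC * (vz n * hh)).
  { apply (Rmult_lt_reg_r (dot t1 t1)); [exact T1|].
    rewrite Rmult_0_l, Rmult_assoc, E, <- Rmult_assoc. apply Rmult_lt_0_compat; [nra | exact HK]. }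
  split; [|split].
  - intro Z. rewrite Z in HzC. lra.
  - rewrite Rmult_assoc. exact HzC.
  - apply (Rmult_lt_reg_r (dot t1 t1)); [exact T1|]. rewrite Rmult_0_l.
    replace (sD * vz n * hh * dot t1 t1) with ((dot t1 t1 * sD) * (vz n * hh)) by ring.
    rewrite Hsides. replace (sC * dot t1 t4 * (vz n * hh)) with (dot t1 t4 * (sC * (vz n * hh))) by ring.
    apply Rmult_lt_0_compat; auto.
Qed.

Definition face_normal (F : net_of) (k l : nat) : vec3 :=
  cross (vsub (F (S k) l) (F k l)) (vsub (F k (S l)) (F k l)).

(** The point whose dual plane is the plane of the face [p_kl]; meaningful
    only when that plane is not isotropic, i.e. [vz (face_normal F k l) <> 0]. *)
Definition face_dual (F : net_of) (k l : nat) : vec3 :=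
  let N := face_normal F k l in let P := F k l in
  mk3 (- vx N / vz N) (- vy N / vz N) ((- vx N / vz N) * vx P + (- vy N / vz N) * vy P - vz P).

Lemma pol_face_dual F k l X : vz (face_normal F k l) <> 0 ->
  pol X (face_dual F k l) = - dot (face_normal F k l) (vsub X (F k l)) / vz (face_normal F k l).
Proof.
  intros H. unfold face_dual, pol. cbv zeta. set (N := face_normal F k l) in *. vsimpl.
  field. exact H.
Qed.

Lemma in_face_plane_dot F k l X : in_face_plane F k l X -> dot (face_normal F k l) (vsub X (F k l)) = 0.
Proof. unfold in_face_plane, face_normal. intro H. rewrite <- H. vsimpl. ring. Qed.

Lemma convex_face_normal F k l : convex_quad (F k l) (F (S k) l) (F (S k) (S l)) (F k (S l)) ->
  face_normal F k l <> vzero /\ in_face_plane F k l (F k l) /\ in_face_plane F k l (F (S k) l) /\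
  in_face_plane F k l (F (S k) (S l)) /\ in_face_plane F k l (F k (S l)).
Proof.
  intros [Hd [_ [_ [_ H4]]]]. cbv zeta in H4. unfold in_face_plane.
  split; [|split; [|split; [|split]]]; try (vsimpl; ring).
  - intro E. replace (cross (vsub (F k l) (F k (S l))) (vsub (F (S k) l) (F k l))) with (face_normal F k l)
      in H4 by (unfold face_normal; apply vec3_eq; vsimpl; ring).
    rewrite E in H4. vsimpl in *. lra.
  - transitivity (- det3 (vsub (F (S k) l) (F k l)) (vsub (F (S k) (S l)) (F k l)) (vsub (F k (S l)) (F k l)));
      [vsimpl; ring | rewrite Hd; ring].
Qed.

(** The plane P* passes through A and B and leaves C and Dq strictly on the side
    opposite to the direction [hh e3]. *)
Definition face_support (A B C Dq : vec3) (hh : R) (P : vec3) : Prop :=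
  pol A P = 0 /\ pol B P = 0 /\ pol C P * hh < 0 /\ pol Dq P * hh < 0.

Lemma face_support_face_dual F k l O A B C Dq wa wb wc wd hh :
  convex_quad (F k l) (F (S k) l) (F (S k) (S l)) (F k (S l)) ->
  in_face_plane F k l O -> in_face_plane F k l A -> in_face_plane F k l B ->
  convex_quad A B C Dq -> off_plane O A B C Dq ->
  0 < wa -> 0 < wb -> 0 < wc -> 0 < wd -> wa + wb + wc + wd = 1 ->
  vsub (wsum4 wa A wb B wc C wd Dq) O = vscale hh e3 ->
  vz (face_normal F k l) <> 0 /\ face_support A B C Dq hh (face_dual F k l).
Proof.
  intros Hface hO hA hB Hc Hoff Ha Hb Hc' Hd Hw Hray.
  set (N := face_normal F k l).
  apply in_face_plane_dot in hO, hA, hB. fold N in hO, hA, hB.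
  assert (Hshift : forall X, dot N (vsub X (F k l)) = dot N (vsub X O)).
  { intro X. transitivity (dot N (vsub X O) + dot N (vsub O (F k l))); [vsimpl; ring | rewrite hO; ring]. }
  rewrite Hshift in hA, hB.
  destruct (hedral_face_side O A B C Dq N wa wb wc wd hh Hc Hoff (proj1 (convex_face_normal F k l Hface))
              hA hB Ha Hb Hc' Hd Hw Hray) as [Hz [sC sD]].
  assert (Hsign : forall X, 0 < dot N (vsub X O) * vz N * hh -> pol X (face_dual F k l) * hh < 0).
  { intros X HX. rewrite pol_face_dual, Hshift by exact Hz. fold N.
    replace (- dot N (vsub X O) / vz N * hh) with (- (dot N (vsub X O) * vz N * hh) / (vz N * vz N))
      by (field; exact Hz).
    assert (0 < vz N * vz N) by (destruct (Rlt_or_le 0 (vz N)); nra).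
    unfold Rdiv. rewrite Ropp_mult_distr_l_reverse. apply Ropp_lt_gt_0_contravar.
    apply Rmult_lt_0_compat; auto. apply Rinv_0_lt_compat; auto. }
  split; [exact Hz|]. unfold face_support. split; [|split; [|split]].
  - rewrite pol_face_dual by exact Hz. fold N. rewrite Hshift, hA. field. exact Hz.
  - rewrite pol_face_dual by exact Hz. fold N. rewrite Hshift, hB. field. exact Hz.
  - apply Hsign; exact sC.
  - apply Hsign; exact sD.
Qed.

Definition dual_star (D1 D2 D3 D4 : vec3) : Prop := exists Q1 Q2 Q3 Q4 hh,
  face_support Q1 Q2 Q3 Q4 hh D1 /\ face_support Q2 Q3 Q4 Q1 hh D2 /\
  face_support Q3 Q4 Q1 Q2 hh D3 /\ face_support Q4 Q1 Q2 Q3 hh D4.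

Lemma admissible_ray O Q1 Q2 Q3 Q4 : admissible_4hedral O Q1 Q2 Q3 Q4 ->
  exists w1 w2 w3 w4 hh, 0 < w1 /\ 0 < w2 /\ 0 < w3 /\ 0 < w4 /\ w1 + w2 + w3 + w4 = 1 /\
    vsub (wsum4 w1 Q1 w2 Q2 w3 Q3 w4 Q4) O = vscale hh e3.
Proof.
  intros [s [lam [w1 [w2 [w3 [w4 [Hlam [H1 [H2 [H3 [H4 [Hw E]]]]]]]]]]]].
  exists w1, w2, w3, w4, (s / lam). repeat split; auto.
  fold (wsum4 w1 Q1 w2 Q2 w3 Q3 w4 Q4) in E.
  apply vec3_eq; [apply (f_equal vx) in E | apply (f_equal vy) in E | apply (f_equal vz) in E];
    vsimpl in *; apply (Rmult_eq_reg_l lam); try lra; field_simplify; lra.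
Qed.

Lemma dual_convex_star m n F i j : dual_convex m n F -> (S i < m)%nat -> (S j < n)%nat ->
  vz (face_normal F i j) <> 0 /\ vz (face_normal F (S i) j) <> 0 /\
  vz (face_normal F (S i) (S j)) <> 0 /\ vz (face_normal F i (S j)) <> 0 /\
  dual_star (face_dual F i j) (face_dual F (S i) j) (face_dual F (S i) (S j)) (face_dual F i (S j)).
Proof.
  intros [Hnet [Hm [Hn Hdc]]] Hi Hj.
  pose proof (Hdc (S i) (S j) ltac:(lia) Hi ltac:(lia) Hj) as Hv. unfold dual_convex_at in Hv. cbv zeta in Hv.
  replace (S i - 1)%nat with i in Hv by lia. replace (S j - 1)%nat with j in Hv by lia.
  destruct Hv as [Q1 [Q2 [Q3 [Q4 [[Hcq Hdet] [Hadm [p1 [p2 [p3 [p4 [p5 [p6 [p7 p8]]]]]]]]]]]]].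
  destruct (admissible_ray _ _ _ _ _ Hadm) as [w1 [w2 [w3 [w4 [hh [Hw1 [Hw2 [Hw3 [Hw4 [Hw Hray]]]]]]]]]].
  pose proof (off_plane_of_det (F (S i) (S j)) Q1 Q2 Q3 Q4 Hdet) as off1.
  pose proof (off_plane_rot _ _ _ _ _ off1) as off2. pose proof (off_plane_rot _ _ _ _ _ off2) as off3.
  pose proof (off_plane_rot _ _ _ _ _ off3) as off4.
  pose proof (convex_quad_rot _ _ _ _ Hcq) as cq2. pose proof (convex_quad_rot _ _ _ _ cq2) as cq3.
  pose proof (convex_quad_rot _ _ _ _ cq3) as cq4.
  assert (ray2 : vsub (wsum4 w2 Q2 w3 Q3 w4 Q4 w1 Q1) (F (S i) (S j)) = vscale hh e3)
    by (rewrite wsum4_rot; exact Hray).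
  assert (ray3 : vsub (wsum4 w3 Q3 w4 Q4 w1 Q1 w2 Q2) (F (S i) (S j)) = vscale hh e3)
    by (rewrite wsum4_rot; exact ray2).
  assert (ray4 : vsub (wsum4 w4 Q4 w1 Q1 w2 Q2 w3 Q3) (F (S i) (S j)) = vscale hh e3)
    by (rewrite wsum4_rot; exact ray3).
  pose proof (Hnet i j ltac:(lia) ltac:(lia)) as f1. pose proof (Hnet (S i) j Hi ltac:(lia)) as f2.
  pose proof (Hnet (S i) (S j) Hi Hj) as f3. pose proof (Hnet i (S j) ltac:(lia) Hj) as f4.
  destruct (face_support_face_dual F i j (F (S i) (S j)) Q1 Q2 Q3 Q4 w1 w2 w3 w4 hh f1
              ltac:(apply convex_face_normal; auto) p1 p2 Hcq off1 Hw1 Hw2 Hw3 Hw4 Hw Hray) as [z1 s1].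
  destruct (face_support_face_dual F (S i) j (F (S i) (S j)) Q2 Q3 Q4 Q1 w2 w3 w4 w1 hh f2
              ltac:(apply convex_face_normal; auto) p3 p4 cq2 off2 Hw2 Hw3 Hw4 Hw1 ltac:(lra) ray2) as [z2 s2].
  destruct (face_support_face_dual F (S i) (S j) (F (S i) (S j)) Q3 Q4 Q1 Q2 w3 w4 w1 w2 hh f3
              ltac:(apply convex_face_normal; auto) p5 p6 cq3 off3 Hw3 Hw4 Hw1 Hw2 ltac:(lra) ray3) as [z3 s3].
  destruct (face_support_face_dual F i (S j) (F (S i) (S j)) Q4 Q1 Q2 Q3 w4 w1 w2 w3 hh f4
              ltac:(apply convex_face_normal; auto) p7 p8 cq4 off4 Hw4 Hw1 Hw2 Hw3 ltac:(lra) ray4) as [z4 s4].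
  repeat split; auto. exists Q1, Q2, Q3, Q4, hh. auto.
Qed.

Lemma dual_star_adj D1 D2 D3 D4 : dual_star D1 D2 D3 D4 -> D1 <> D2 /\ D2 <> D3 /\ D3 <> D4 /\ D4 <> D1.
Proof.
  intros [Q1 [Q2 [Q3 [Q4 [hh [[a1 [a2 [a3 a4]]] [[b1 [b2 [b3 b4]]] [[c1 [c2 [c3 c4]]] [d1 [d2 [d3 d4]]]]]]]]]]].
  repeat split; intros <-; nra.
Qed.

Lemma pol_signs_parallel Q P1 P2 P3 P4 hh al be u : pol Q P1 = 0 -> pol Q P2 = 0 ->
  pol Q P3 * hh < 0 -> pol Q P4 * hh < 0 ->
  vsub P4 P1 = vscale al u -> vsub P3 P2 = vscale be u -> 0 < al * be.
Proof.
  intros h1 h2 h3 h4 E4 E3.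
  rewrite (pol_shift Q P1 P4), h1, E4, dpol_scale in h4.
  rewrite (pol_shift Q P2 P3), h2, E3, dpol_scale in h3.
  rewrite Rplus_0_l, Rmult_assoc in h3, h4.
  assert (Hp : 0 < (al * (dpol Q u * hh)) * (be * (dpol Q u * hh))) by nra.
  replace ((al * (dpol Q u * hh)) * (be * (dpol Q u * hh))) with ((al * be) * ((dpol Q u * hh) * (dpol Q u * hh)))
    in Hp by ring.
  destruct (Rlt_or_le 0 (al * be)) as [|Hab]; auto.
  assert (0 <= (dpol Q u * hh) * (dpol Q u * hh)) by nra. nra.
Qed.

Lemma dual_star_sign_j D1 D2 D3 D4 al be u : dual_star D1 D2 D3 D4 ->
  vsub D4 D1 = vscale al u -> vsub D3 D2 = vscale be u -> 0 < al * be.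
Proof.
  intros [Q1 [Q2 [Q3 [Q4 [hh [[a1 [a2 _]] [[b1 _] [[_ [_ [_ c4]]] [_ [_ [d3 _]]]]]]]]]]].
  exact (pol_signs_parallel Q2 D1 D2 D3 D4 hh al be u a2 b1 c4 d3).
Qed.

Lemma dual_star_sign_i D1 D2 D3 D4 al be u : dual_star D1 D2 D3 D4 ->
  vsub D2 D1 = vscale al u -> vsub D3 D4 = vscale be u -> 0 < al * be.
Proof.
  intros [Q1 [Q2 [Q3 [Q4 [hh [[a1 _] [[_ [_ [_ b4]]] [[_ [_ [c3 _]]] [_ [d2 _]]]]]]]]]].
  exact (pol_signs_parallel Q1 D1 D4 D3 D2 hh al be u a1 d2 c3 b4).
Qed.

Section DualConvex.

Variables (m n : nat) (F : net_of).
Hypothesis Hdc : dual_convex m n F.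

Let Hnet : is_net m n F := proj1 Hdc.
Let Hm : (2 <= m)%nat := proj1 (proj2 Hdc).
Let Hn : (2 <= n)%nat := proj1 (proj2 (proj2 Hdc)).

Lemma dual_convex_face_normal k l : (k < m)%nat -> (l < n)%nat -> vz (face_normal F k l) <> 0.
Proof.
  intros Hk Hl.
  destruct (Compare_dec.lt_dec (S k) m) as [Hk'|Hk']; destruct (Compare_dec.lt_dec (S l) n) as [Hl'|Hl'].
  - apply (dual_convex_star m n F k l Hdc Hk' Hl').
  - destruct l as [|l]; [lia|]. apply (dual_convex_star m n F k l Hdc Hk' ltac:(lia)).
  - destruct k as [|k]; [lia|]. apply (dual_convex_star m n F k l Hdc ltac:(lia) Hl').
  - destruct k as [|k]; [lia|]. destruct l as [|l]; [lia|].
    apply (dual_convex_star m n F k l Hdc ltac:(lia) ltac:(lia)).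
Qed.

Let star i j (Hi : (S i < m)%nat) (Hj : (S j < n)%nat) :=
  proj2 (proj2 (proj2 (proj2 (dual_convex_star m n F i j Hdc Hi Hj)))).

Lemma dual_net_of_dual_convex : dual_net m n F (face_dual F).
Proof.
  split; auto.
  - intros k l Hk Hl. destruct (convex_face_normal F k l (Hnet k l Hk Hl)) as [_ [f1 [f2 [f3 f4]]]].
    pose proof (dual_convex_face_normal k l Hk Hl) as Hz.
    repeat split; rewrite pol_face_dual, in_face_plane_dot by auto; field; exact Hz.
  - intros k l Hk Hl. destruct k as [|k].
    + exact (not_eq_sym (proj2 (proj2 (proj2 (dual_star_adj _ _ _ _ (star 0 l Hm Hl)))))).
    + exact (proj1 (proj2 (dual_star_adj _ _ _ _ (star k l Hk Hl)))).
  - intros k l Hk Hl. destruct l as [|l].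
    + exact (proj1 (dual_star_adj _ _ _ _ (star k 0 Hk ltac:(lia)))).
    + exact (not_eq_sym (proj1 (proj2 (proj2 (dual_star_adj _ _ _ _ (star k l Hk Hl)))))).
  - intros i j u al be Hi Hj. apply dual_star_sign_j, (star i j Hi Hj).
  - intros i j u al be Hi Hj. apply dual_star_sign_i, (star i j Hi Hj).
Qed.

End DualConvex.

Lemma dual_net_transpose m n F D : dual_net m n F D -> dual_net n m (transpose_net F) (fun k l => D l k).
Proof.
  intros HD. split.
  - exact (dn_n _ _ _ _ HD).
  - exact (dn_m _ _ _ _ HD).
  - intros k l Hk Hl. apply convex_quad_rev, (dn_net _ _ _ _ HD l k Hl Hk).
  - intros k l Hk Hl. destruct (dn_face _ _ _ _ HD l k Hl Hk) as [h1 [h2 [h3 h4]]]. repeat split; auto.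
  - intros k l Hk Hl. apply (dn_adj_i _ _ _ _ HD l k); auto.
  - intros k l Hk Hl. apply (dn_adj_j _ _ _ _ HD l k); auto.
  - intros i j u al be Hi Hj. apply (dn_sign_i _ _ _ _ HD j i); auto.
  - intros i j u al be Hi Hj. apply (dn_sign_j _ _ _ _ HD j i); auto.
Qed.

Lemma T_representation_of_dual_net m n F D : dual_net m n F D ->
  (forall i, (i <= m)%nat -> in_some_plane (line_i n F i)) ->
  (forall j, (j <= n)%nat -> in_some_isotropic_plane (line_j m F j)) ->
  T_representation m n F.
Proof.
  intros HD Hrows Hcols.
  destruct (dn_T_point_representation m n F D HD
              (fun i Hi => row_in_plane n F i (Hrows i Hi)) (fun j Hj => column_direction m F j (Hcols j Hj)))
    as [a [b [sigma [Hs Hrep]]]].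
  exists a, b, sigma. split; [exact Hs|]. split; [exact Hrep|].
  exists 1. split; [lra|].
  pose proof (dn_m _ _ _ _ HD). apply T_family_nontrivial; auto; [lia | exact (dn_n _ _ _ _ HD) | exact (dn_net _ _ _ _ HD)].
Qed.

Theorem proposition4 (m n : nat) (F : net_of) :
  generalized_T_net m n F ->
  T_representation m n F \/ T_representation n m (transpose_net F).
Proof.
  intros [Hdc [Hrows [Hcols Hiso]]].
  pose proof (dual_net_of_dual_convex m n F Hdc) as HD.
  destruct Hiso as [Hiso_rows | Hiso_cols].
  - right. apply (T_representation_of_dual_net n m (transpose_net F) (fun k l => face_dual F l k)).
    + exact (dual_net_transpose m n F _ HD).
    + exact Hcols.
    + exact Hiso_rows.
  - left. exact (T_representation_of_dual_net m n F (face_dual F) HD Hrows Hiso_cols).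
Qed.
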